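(* In the algebra $\mathcal{A}$ described in the context, the element \[A^{\mathrm{bi}}_{s;mn}(W)=(E_n-sQ_n^2)(sQ_m^2E_m-1)-(E_m-sQ_m^2)(sQ_n^2E_n-1)\] is a right divisor of \[P^1_W(s,sE_n,Q_n)\,Y(s,sE_n,Q_n)\,\mathfrak{A}_m(W)(s,E_m,Q_m,Q_n)-P^1_W(s,sE_m,Q_m)\,Y(s,sE_m,Q_m)\,\mathfrak{A}_n(W)(s,E_n,Q_m,Q_n),\] i.e. this element equals $C\,A^{\mathrm{bi}}_{s;mn}(W)$ for some $C\in\mathcal{A}$.
   Context: $s$ is an indeterminate. $\mathcal{A}$ is the algebra of noncommutative polynomials in $E_m,E_n$ with coefficients in $\mathbb{Q}(s,Q_m,Q_n)$ written on the left, subject to $E_mE_n=E_nE_m$, $E_m\,p(s,Q_m,Q_n)=p(s,sQ_m,Q_n)E_m$, $E_n\,p(s,Q_m,Q_n)=p(s,Q_m,sQ_n)E_n$ (these are the composition rules of the operators $(E_mf)(m,n)=f(m+1,n)$, $(E_nf)(m,n)=f(m,n+1)$, $(Q_mf)(m,n)=s^mf(m,n)$, $(Q_nf)(m,n)=s^nf(m,n)$). For a pair $(E,Q)$ with $EQ=sQE$ put $\Phi_k(Q)=1-s^kQ^4$ and $u_1(s,E,Q)=\frac{1}{\Phi_6(Q)}E-\frac{s^2Q^2}{\Phi_2(Q)}$, $v_1(s,E,Q)=\frac{s^2Q^2}{\Phi_6(Q)}E-\frac{1}{\Phi_2(Q)}$, $u_2(s,E,Q)=\frac{s^{12}Q^4}{\Phi_{10}(Q)\Phi_{12}(Q)}E^2-\frac{s^4(1+s^2)Q^2}{\Phi_6(Q)\Phi_{10}(Q)}E+\frac{1}{\Phi_4(Q)\Phi_6(Q)}$,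 $v_2(s,E,Q)=\frac{1}{\Phi_{10}(Q)\Phi_{12}(Q)}E^2-\frac{s^2(1+s^2)Q^2}{\Phi_6(Q)\Phi_{10}(Q)}E+\frac{s^4Q^4}{\Phi_4(Q)\Phi_6(Q)}$, $Y(s,E,Q)=u_2u_1(E-s^2Q^2)$, and $P^1_W(s,E,Q)=(E+1)\frac{(1-s^2Q^2)(1-s^6Q^2)}{1+s^4Q^2}$; $P^1_W(s,sE,Q)$ and $Y(s,sE,Q)$ mean substituting $sE$ for $E$. With $u_i,v_i,Y$ taken at $(s,E_m,Q_m)$ define $P^0_W(s,E_m,Q_m,Q_n)=(s^2-s^4)u_2v_1(Q_m^2E_m-1)+s^2(Q_n^2+1+Q_n^{-2})u_2u_1(Q_m^2E_m-1)+s^2u_2u_1(s^2Q_m^2+s^{-2}Q_m^{-2})(Q_m^2E_m-1)+(s^2-s^4)u_2(Q_m^2E_m-1)-Y(Q_m^2Q_n^2+Q_m^2Q_n^{-2}+3+Q_m^{-2}Q_n^2+Q_m^{-2}Q_n^{-2})+s^{-2}(Q_n^2-s^2+Q_n^{-2})v_2v_1(E_m-s^2Q_m^2)+s^{-2}v_2v_1(s^2Q_m^2+s^{-2}Q_m^{-2})(E_m-s^2Q_m^2)+(s^{-4}-s^{-2})v_2Q_m^{-2}(E_m-s^2Q_m^2)-s^{-4}v_2u_1(E_m-s^2Q_m^2)$, and $\mathfrak{A}_m(W)(s,E_m,Q_m,Q_n)=P^1_W(s,sE_m,Q_m)P^0_W(s,sE_m,Q_m,Q_n)$ (substitute $sE_m$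 for $E_m$). $\mathfrak{A}_n(W)(s,E_n,Q_m,Q_n)$ is the same expression with $E_m$ replaced by $E_n$ and the roles of $Q_m$ and $Q_n$ interchanged. (These are annihilating operators of the colored Jones polynomial of the Whitehead link.) *)

From HB Require Import structures.
From mathcomp Require Import all_boot all_order all_algebra.
From mathcomp Require Import fraction.
From mathcomp.multinomials Require Import mpoly.
Set Implicit Arguments. Unset Strict Implicit. Unset Printing Implicit Defensive.
Import Order.TTheory GRing.Theory.
Local Open Scope ring_scope.

(* The coefficient field Q(s, Q_m, Q_n): fractions of {mpoly rat[3]},      *)
Definition Rpol := {mpoly rat[3]}.
Definition K := {fraction Rpol}.

Definition var (i : 'I_3) : K := tofrac ('X_i : Rpol).
Definition s_ : K := var 0.
Definition Qm : K := var 1.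
Definition Qn : K := var 2.

Definition frac_lift (f : Rpol -> Rpol) (x : K) : K :=
  tofrac (f \n_(repr x)) / tofrac (f \d_(repr x)).

Definition sigm_pol (p : Rpol) : Rpol :=
  p \mPo [tuple 'X_0; 'X_0 * 'X_1; 'X_2].
Definition sign_pol (p : Rpol) : Rpol :=
  p \mPo [tuple 'X_0; 'X_1; 'X_0 * 'X_2].
Definition sigm : K -> K := frac_lift sigm_pol.
Definition sign : K -> K := frac_lift sign_pol.

(* The Ore algebra A: an element is sum_{i,j} c_{ij} E_m^i E_n^j with      *)
(* coefficients written on the left; we store the coefficient function    *)
(* (i,j) |-> c_{ij}.  Genuine elements of A are the finitely supported    *)
(* ones (predicate [fin_supp]).                                           *)
Definition ore := nat -> nat -> K.

Definition fin_supp (f : ore) : Prop :=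
  exists N : nat, forall i j : nat, (N <= i)%N || (N <= j)%N -> f i j = 0.

Definition oc (c : K) : ore := fun i j => if (i == 0%N) && (j == 0%N) then c else 0.
Definition oEm : ore := fun i j => if (i == 1%N) && (j == 0%N) then 1 else 0.
Definition oEn : ore := fun i j => if (i == 0%N) && (j == 1%N) then 1 else 0.
Definition oadd (f g : ore) : ore := fun i j => f i j + g i j.
Definition oopp (f : ore) : ore := fun i j => - f i j.
(* (c E_m^i E_n^j)(d E_m^k E_n^l) = c sigm^i(sign^j(d)) E_m^(i+k) E_n^(j+l) *)
Definition omul (f g : ore) : ore := fun a b =>
  \sum_(i < a.+1) \sum_(j < b.+1)
     f i j * iter i sigm (iter j sign (g (a - i)%N (b - j)%N)).

Declare Scope ore_scope.
Delimit Scope ore_scope with ore.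
Notation "x + y" := (oadd x y) : ore_scope.
Notation "x - y" := (oadd x (oopp y)) : ore_scope.
Notation "x * y" := (omul x y) : ore_scope.
Notation "c %:O" := (oc c) (at level 2, format "c %:O") : ore_scope.

Local Open Scope ore_scope.

Definition Phi (k : nat) (Q : K) : K := (1 - s_ ^+ k * Q ^+ 4)%R.

Definition u1 (E : ore) (Q : K) : ore :=
  (1 / Phi 6 Q)%R%:O * E - (s_ ^+ 2 * Q ^+ 2 / Phi 2 Q)%R%:O.
Definition v1 (E : ore) (Q : K) : ore :=
  (s_ ^+ 2 * Q ^+ 2 / Phi 6 Q)%R%:O * E - (1 / Phi 2 Q)%R%:O.
Definition u2 (E : ore) (Q : K) : ore :=
  (s_ ^+ 12 * Q ^+ 4 / (Phi 10 Q * Phi 12 Q))%R%:O * (E * E)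
  - (s_ ^+ 4 * (1 + s_ ^+ 2) * Q ^+ 2 / (Phi 6 Q * Phi 10 Q))%R%:O * E
  + (1 / (Phi 4 Q * Phi 6 Q))%R%:O.
Definition v2 (E : ore) (Q : K) : ore :=
  (1 / (Phi 10 Q * Phi 12 Q))%R%:O * (E * E)
  - (s_ ^+ 2 * (1 + s_ ^+ 2) * Q ^+ 2 / (Phi 6 Q * Phi 10 Q))%R%:O * E
  + (s_ ^+ 4 * Q ^+ 4 / (Phi 4 Q * Phi 6 Q))%R%:O.
Definition Y (E : ore) (Q : K) : ore :=
  u2 E Q * u1 E Q * (E - (s_ ^+ 2 * Q ^+ 2)%R%:O).
Definition P1 (E : ore) (Q : K) : ore :=
  (E + 1%:O) * ((1 - s_ ^+ 2 * Q ^+ 2) * (1 - s_ ^+ 6 * Q ^+ 2)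
                / (1 + s_ ^+ 4 * Q ^+ 2))%R%:O.

(* P^0_W(s, E, Q, Q') where (E,Q) is the active pair and Q' the other one *)
Definition P0 (E : ore) (Q Q' : K) : ore :=
  let U1 := u1 E Q in let V1 := v1 E Q in
  let U2 := u2 E Q in let V2 := v2 E Q in
  let F1 := (Q ^+ 2)%R%:O * E - 1%:O in
  let F2 := E - (s_ ^+ 2 * Q ^+ 2)%R%:O in
     (s_ ^+ 2 - s_ ^+ 4)%R%:O * U2 * V1 * F1
   + (s_ ^+ 2 * (Q' ^+ 2 + 1 + Q' ^- 2))%R%:O * U2 * U1 * F1
   + (s_ ^+ 2)%R%:O * U2 * U1 * (s_ ^+ 2 * Q ^+ 2 + s_ ^- 2 * Q ^- 2)%R%:O * F1
   + (s_ ^+ 2 - s_ ^+ 4)%R%:O * U2 * F1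
   - Y E Q * (Q ^+ 2 * Q' ^+ 2 + Q ^+ 2 * Q' ^- 2 + 3
              + Q ^- 2 * Q' ^+ 2 + Q ^- 2 * Q' ^- 2)%R%:O
   + (s_ ^- 2 * (Q' ^+ 2 - s_ ^+ 2 + Q' ^- 2))%R%:O * V2 * V1 * F2
   + (s_ ^- 2)%R%:O * V2 * V1 * (s_ ^+ 2 * Q ^+ 2 + s_ ^- 2 * Q ^- 2)%R%:O * F2
   + (s_ ^- 4 - s_ ^- 2)%R%:O * V2 * (Q ^- 2)%R%:O * F2
   - (s_ ^- 4)%R%:O * V2 * U1 * F2.

Definition sEm : ore := s_%:O * oEm.
Definition sEn : ore := s_%:O * oEn.

Definition frakAm : ore := P1 sEm Qm * P0 sEm Qm Qn.
Definition frakAn : ore := P1 sEn Qn * P0 sEn Qn Qm.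

Definition Abi : ore :=
  (oEn - (s_ * Qn ^+ 2)%R%:O) * ((s_ * Qm ^+ 2)%R%:O * oEm - 1%:O)
  - (oEm - (s_ * Qm ^+ 2)%R%:O) * ((s_ * Qn ^+ 2)%R%:O * oEn - 1%:O).

Definition bigop_elt : ore :=
  P1 sEn Qn * Y sEn Qn * frakAm - P1 sEm Qm * Y sEm Qm * frakAn.

(* Finitely supported elements of A are finite matrices of coefficients, and
   the product of A only needs the shifts sigma_m, sigma_n on coefficients,
   which act on rational expressions in s, Q_m, Q_n syntactically.  Every
   operator of the statement therefore has a computable normal form, whose
   entries are rational functions with denominators products of factors
   1 -+ s^a Q^2.  The cofactor C is given explicitly (it was found by right
   division by A^bi), and bigop_elt = C A^bi becomes finitely many identities
   of rational functions.  Each is proved by [field] in an arbitrary field at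
   a point where no polynomial with nonzero constant term vanishes, which is
   true of the indeterminates themselves; working at an abstract point keeps
   the variables opaque to [field]. *)

From HB Require Import structures.
From mathcomp Require Import all_boot all_order all_algebra fraction.
From mathcomp.multinomials Require Import mpoly.
From mathcomp Require Import ring zify generic_quotient.
From Stdlib Require Import FunctionalExtensionality.
Set Implicit Arguments. Unset Strict Implicit. Unset Printing Implicit Defensive.
Import Order.TTheory GRing.Theory.
Local Open Scope ring_scope.
Local Open Scope quotient_scope.

(** * The shifts as field automorphisms *)

Section FractionRepr.
Variable R : idomainType.

Lemma tofrac_inj : injective (@tofrac R).
Proof. by move=> p q /eqP; rewrite tofrac_eq => /eqP. Qed.

Lemma frac_reprE (x : {fraction R}) :
  x = tofrac (\n_(repr x)) / tofrac (\d_(repr x)).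
Proof.
set r := repr x.
have dF : tofrac \d_r != 0 by rewrite tofrac_eq0 denom_ratioP.
apply: (mulIf dF); rewrite mulfVK //.
have tofracE p : tofrac p = \pi_{fraction R} (Ratio p 1) by unlock FracField.tofrac.
rewrite !tofracE -[x in LHS]reprK -/r.
change (FracField.mul (\pi_{fraction R} r) (\pi_{fraction R} (Ratio \d_r 1))
  = \pi_{fraction R} (Ratio \n_r 1)).
rewrite -FracField.pi_mul; apply/eqmodP.
rewrite /= FracField.equivfE /FracField.mulf /=.
rewrite !numden_Ratio ?mulr1.
all: by rewrite ?(mulrC \n_r) ?oner_neq0 ?denom_ratioP.
Qed.

Lemma fracP (x : {fraction R}) : exists a b, b != 0 /\ x = tofrac a / tofrac b.
Proof. by exists \n_(repr x), \d_(repr x); rewrite denom_ratioP -frac_reprE. Qed.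

Lemma tofrac_divB (a b c e : R) : b != 0 -> e != 0 ->
  tofrac a / tofrac b - tofrac c / tofrac e = tofrac (a * e - c * b) / tofrac (b * e).
Proof.
move=> b0 e0; rewrite -mulNr -tofracN addf_div ?tofrac_eq0 //.
by rewrite -!tofracM -tofracD mulNr.
Qed.

Lemma tofrac_divM (a b c e : R) :
  tofrac a / tofrac b * (tofrac c / tofrac e) = tofrac (a * c) / tofrac (b * e).
Proof. by rewrite mulf_div -!tofracM. Qed.

End FractionRepr.

Section FracLift.
Variable g : {rmorphism Rpol -> Rpol}.
Hypothesis g_inj : injective g.

Let g_neq0 b : b != 0 -> g b != 0.
Proof. by move=> b0; rewrite -(rmorph0 g) (inj_eq g_inj). Qed.

Lemma frac_lift_div a b :
  b != 0 -> frac_lift g (tofrac a / tofrac b) = tofrac (g a) / tofrac (g b).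
Proof.
move=> b0; rewrite /frac_lift; set x := tofrac a / tofrac b.
have d0 : \d_(repr x) != 0 := denom_ratioP _.
have /eqP := frac_reprE x; rewrite {1}/x eqr_div ?tofrac_eq0 // => /eqP.
rewrite -!tofracM => /tofrac_inj ad_nb.
by apply/eqP; rewrite eqr_div ?tofrac_eq0 ?g_neq0 // -!tofracM -!rmorphM ad_nb.
Qed.

Lemma frac_lift_tofrac p : frac_lift g (tofrac p) = tofrac (g p).
Proof.
by rewrite -[tofrac p]divr1 -tofrac1 frac_lift_div ?oner_neq0 // rmorph1 tofrac1 divr1.
Qed.

Lemma frac_lift_is_zmod_morphism : zmod_morphism (frac_lift g).
Proof.
move=> x y; have [a [b [b0 ->]]] := fracP x; have [c [e [e0 ->]]] := fracP y.
rewrite tofrac_divB // !frac_lift_div ?mulf_neq0 // tofrac_divB ?g_neq0 //.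
by rewrite rmorphB !rmorphM.
Qed.

Lemma frac_lift_is_monoid_morphism : monoid_morphism (frac_lift g).
Proof.
split; first by rewrite -tofrac1 frac_lift_tofrac rmorph1.
move=> x y; have [a [b [b0 ->]]] := fracP x; have [c [e [e0 ->]]] := fracP y.
by rewrite tofrac_divM !frac_lift_div ?mulf_neq0 // tofrac_divM !rmorphM.
Qed.

End FracLift.

Section MmapComp.
Variables (n : nat) (R S : comNzRingType) (f : {rmorphism R -> S}).

Lemma mmap_comp_mpoly (h : 'I_n -> S) (lq : n.-tuple {mpoly R[n]}) p :
  mmap f h (p \mPo lq) = mmap f (fun i => mmap f h (tnth lq i)) p.
Proof.
elim/mpolyind: p => [|c m p _ _ IH]; first by rewrite comp_mpoly0 !mmap0.
rewrite comp_mpolyD comp_mpolyZ comp_mpolyX !mmapD !mmapZ IH mmapX.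
by rewrite rmorph_prod; congr (_ * _ + _); apply: eq_bigr => i _; rewrite rmorphXn.
Qed.

Lemma mmap_rmorph (g : {rmorphism {mpoly R[n]} -> S}) p :
  mmap (g \o @mpolyC n R)%FUN (fun i => g 'X_i) p = g p.
Proof.
elim/mpolyind: p => [|c m p _ _ IH]; first by rewrite mmap0 rmorph0.
rewrite mmapD mmapZ IH mmapX rmorphD -mul_mpolyC rmorphM [in RHS]mpolyXE_id.
by rewrite rmorph_prod; congr (_ * _ + _); apply: eq_bigr => i _; rewrite rmorphXn.
Qed.

End MmapComp.

Definition ratK : {rmorphism rat -> K} := (@tofrac Rpol \o @mpolyC 3 rat)%FUN.

Lemma comp_mpoly_inj (lq : 3.-tuple Rpol) (h : 'I_3 -> K) :
  (forall i, mmap ratK h (tnth lq i) = tofrac 'X_i) -> injective (comp_mpoly lq).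
Proof.
move=> lqK p q pq; apply: tofrac_inj.
have tofracE r : tofrac r = mmap ratK h (r \mPo lq).
  rewrite mmap_comp_mpoly -[LHS](mmap_rmorph (@tofrac Rpol)).
  by congr mmap; apply: functional_extensionality => i; rewrite lqK.
by rewrite !tofracE pq.
Qed.

Lemma forall_ord3 (P : 'I_3 -> Prop) : P 0 -> P 1 -> P 2 -> forall i, P i.
Proof.
move=> P0 P1 P2 [[|[|[|//]]] i3]; [rewrite (_ : Ordinal i3 = 0) |
  rewrite (_ : Ordinal i3 = 1) | rewrite (_ : Ordinal i3 = 2)]; by [|apply: val_inj].
Qed.

Lemma mmap_ratK_X h (i : 'I_3) : mmap ratK h 'X_i = h i.
Proof. by rewrite mmapX mmap1U. Qed.

Lemma mmap_ratK_M h (p q : Rpol) : mmap ratK h (p * q) = mmap ratK h p * mmap ratK h q.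
Proof. exact: rmorphM. Qed.

Lemma var_neq0 i : var i != 0.
Proof.
rewrite tofrac_eq0; apply/eqP => /(congr1 (meval (fun _ => 1))).
by rewrite mevalXU meval0 => /eqP; rewrite oner_eq0.
Qed.

Definition sigm_args : 3.-tuple Rpol := [tuple 'X_0; 'X_0 * 'X_1; 'X_2].
Definition sign_args : 3.-tuple Rpol := [tuple 'X_0; 'X_1; 'X_0 * 'X_2].

Lemma sigm_pol_inj : injective sigm_pol.
Proof.
apply: (@comp_mpoly_inj _ (fun i => if i == 1 then var 1 / var 0 else var i)).
apply: forall_ord3.
- by rewrite -[tnth _ 0]/('X_0 : Rpol) mmap_ratK_X.
- rewrite -[tnth _ 1]/('X_0 * 'X_1 : Rpol) mmap_ratK_M !mmap_ratK_X /=.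
  by rewrite mulrCA divff ?mulr1 ?var_neq0.
- by rewrite -[tnth _ 2]/('X_2 : Rpol) mmap_ratK_X.
Qed.

Lemma sign_pol_inj : injective sign_pol.
Proof.
apply: (@comp_mpoly_inj _ (fun i => if i == 2 then var 2 / var 0 else var i)).
apply: forall_ord3.
- by rewrite -[tnth _ 0]/('X_0 : Rpol) mmap_ratK_X.
- by rewrite -[tnth _ 1]/('X_1 : Rpol) mmap_ratK_X.
- rewrite -[tnth _ 2]/('X_0 * 'X_2 : Rpol) mmap_ratK_M !mmap_ratK_X /=.
  by rewrite mulrCA divff ?mulr1 ?var_neq0.
Qed.

Lemma sigm_is_zmod_morphism : zmod_morphism sigm.
Proof. exact: (frac_lift_is_zmod_morphism (g := comp_mpoly sigm_args) sigm_pol_inj). Qed.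
Lemma sigm_is_monoid_morphism : monoid_morphism sigm.
Proof. exact: (frac_lift_is_monoid_morphism (g := comp_mpoly sigm_args) sigm_pol_inj). Qed.
Lemma sign_is_zmod_morphism : zmod_morphism sign.
Proof. exact: (frac_lift_is_zmod_morphism (g := comp_mpoly sign_args) sign_pol_inj). Qed.
Lemma sign_is_monoid_morphism : monoid_morphism sign.
Proof. exact: (frac_lift_is_monoid_morphism (g := comp_mpoly sign_args) sign_pol_inj). Qed.

HB.instance Definition _ := GRing.isZmodMorphism.Build K K sigm sigm_is_zmod_morphism.
HB.instance Definition _ := GRing.isMonoidMorphism.Build K K sigm sigm_is_monoid_morphism.
HB.instance Definition _ := GRing.isZmodMorphism.Build K K sign sign_is_zmod_morphism.
HB.instance Definition _ := GRing.isMonoidMorphism.Build K K sign sign_is_monoid_morphism.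

Lemma sigm_var i : sigm (var i) = tofrac ('X_i \mPo sigm_args).
Proof. exact: (frac_lift_tofrac (g := comp_mpoly sigm_args) sigm_pol_inj). Qed.
Lemma sign_var i : sign (var i) = tofrac ('X_i \mPo sign_args).
Proof. exact: (frac_lift_tofrac (g := comp_mpoly sign_args) sign_pol_inj). Qed.

Lemma sigm_s : sigm s_ = s_. Proof. by rewrite sigm_var comp_mpolyXU. Qed.
Lemma sigm_Qm : sigm Qm = s_ * Qm. Proof. by rewrite sigm_var comp_mpolyXU tofracM. Qed.
Lemma sigm_Qn : sigm Qn = Qn. Proof. by rewrite sigm_var comp_mpolyXU. Qed.
Lemma sign_s : sign s_ = s_. Proof. by rewrite sign_var comp_mpolyXU. Qed.
Lemma sign_Qm : sign Qm = Qm. Proof. by rewrite sign_var comp_mpolyXU. Qed.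
Lemma sign_Qn : sign Qn = s_ * Qn. Proof. by rewrite sign_var comp_mpolyXU tofracM. Qed.

(** * Rational expressions *)

(* [Mon b c i j k] is [(-1)^b c s^i Q_m^j Q_n^k] and [Fac b a v] is [1 -+ s^a Q^2]
   (minus iff [b], with [Q = Q_n] iff [v]): the leaves in which the precomputed
   normal forms are written. *)
Inductive rexpr :=
  | Zero | One | Nat of nat | VarS | VarQm | VarQn
  | Add of rexpr & rexpr | Opp of rexpr | Mul of rexpr & rexpr | Inv of rexpr
  | Pow of rexpr & nat
  | Mon of bool & nat & nat & nat & nat
  | Fac of bool & nat & bool.

Fixpoint reval (F : fieldType) (s qm qn : F) (e : rexpr) : F :=
  match e with
  | Zero => 0 | One => 1 | Nat n => n%:R | VarS => s | VarQm => qm | VarQn => qn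
  | Add x y => reval s qm qn x + reval s qm qn y
  | Opp x => - reval s qm qn x
  | Mul x y => reval s qm qn x * reval s qm qn y
  | Inv x => (reval s qm qn x)^-1
  | Pow x n => reval s qm qn x ^+ n
  | Mon b c i j k => (if b then - c%:R else c%:R) * (s ^+ i * (qm ^+ j * qn ^+ k))
  | Fac b a v => if b then 1 - s ^+ a * (if v then qn else qm) ^+ 2
                 else 1 + s ^+ a * (if v then qn else qm) ^+ 2
  end.

Definition evalK : rexpr -> K := reval s_ Qm Qn.

Fixpoint shift_m (e : rexpr) : rexpr :=
  match e with
  | VarQm => Mul VarS VarQm
  | Add x y => Add (shift_m x) (shift_m y)
  | Opp x => Opp (shift_m x)
  | Mul x y => Mul (shift_m x) (shift_m y)
  | Inv x => Inv (shift_m x)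
  | Pow x n => Pow (shift_m x) n
  | Mon b c i j k => Mon b c (i + j) j k
  | Fac b a false => Fac b (a + 2) false
  | e => e
  end.

Fixpoint shift_n (e : rexpr) : rexpr :=
  match e with
  | VarQn => Mul VarS VarQn
  | Add x y => Add (shift_n x) (shift_n y)
  | Opp x => Opp (shift_n x)
  | Mul x y => Mul (shift_n x) (shift_n y)
  | Inv x => Inv (shift_n x)
  | Pow x n => Pow (shift_n x) n
  | Mon b c i j k => Mon b c (i + k) j k
  | Fac b a true => Fac b (a + 2) true
  | e => e
  end.

Lemma rmorph_reval (F F' : fieldType) (f : {rmorphism F -> F'}) s qm qn e :
  f (reval s qm qn e) = reval (f s) (f qm) (f qn) e.
Proof.
elim: e => [||n|||| x IHx y IHy | x IHx | x IHx y IHy | x IHx | x IHx n | [] c i j k | [] a []] /=.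
all: rewrite ?rmorph0 ?rmorph1 ?rmorph_nat ?rmorphD ?rmorphN ?rmorphM ?fmorphV ?IHx ?IHy //.
all: by rewrite ?rmorphXn ?rmorphMNn ?rmorph_nat ?rmorph1 ?IHx ?expr2.
Qed.

Section Shifts.
Variables (F : fieldType) (s qm qn : F).

Lemma reval_shift_m e : reval s (s * qm) qn e = reval s qm qn (shift_m e).
Proof.
elim: e => [||n|||| x IHx y IHy | x IHx | x IHx y IHy | x IHx | x IHx n | b c i j k | b a []] /=.
all: by rewrite ?IHx ?IHy ?exprMn ?exprD ?mulrA.
Qed.

Lemma reval_shift_n e : reval s qm (s * qn) e = reval s qm qn (shift_n e).
Proof.
elim: e => [||n|||| x IHx y IHy | x IHx | x IHx y IHy | x IHx | x IHx n | b c i j k | b a []] /=.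
all: by rewrite ?IHx ?IHy ?exprMn ?exprD ?mulrA // (mulrAC _ (qm ^+ _)).
Qed.

End Shifts.

Lemma sigm_evalK e : sigm (evalK e) = evalK (shift_m e).
Proof. by rewrite /evalK rmorph_reval /= sigm_s sigm_Qm sigm_Qn reval_shift_m. Qed.

Lemma sign_evalK e : sign (evalK e) = evalK (shift_n e).
Proof. by rewrite /evalK rmorph_reval /= sign_s sign_Qm sign_Qn reval_shift_n. Qed.

Fixpoint is_poly (e : rexpr) : bool :=
  match e with
  | Inv _ => false
  | Add x y | Mul x y => is_poly x && is_poly y
  | Opp x | Pow x _ => is_poly x
  | _ => true
  end.

Fixpoint poly_of (e : rexpr) : Rpol :=
  match e with
  | Zero | Inv _ => 0 | One => 1 | Nat n => n%:R
  | VarS => 'X_0 | VarQm => 'X_1 | VarQn => 'X_2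
  | Add x y => poly_of x + poly_of y
  | Opp x => - poly_of x
  | Mul x y => poly_of x * poly_of y
  | Pow x n => poly_of x ^+ n
  | Mon b c i j k => (if b then - c%:R else c%:R) * ('X_0 ^+ i * ('X_1 ^+ j * 'X_2 ^+ k))
  | Fac b a v => if b then 1 - 'X_0 ^+ a * (if v then 'X_2 else 'X_1) ^+ 2
                 else 1 + 'X_0 ^+ a * (if v then 'X_2 else 'X_1) ^+ 2
  end.

Lemma rmorph_poly_of (F : fieldType) (f : {rmorphism Rpol -> F}) e :
  is_poly e -> f (poly_of e) = reval (f 'X_0) (f 'X_1) (f 'X_2) e.
Proof.
elim: e => [||n|||| x IHx y IHy | x IHx | x IHx y IHy | x IHx | x IHx n
  | [] c i j k | [] a []] //=.
all: rewrite ?rmorph0 ?rmorph1 ?rmorph_nat //.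
all: try by move=> /andP[/IHx <- /IHy <-]; rewrite ?rmorphD ?rmorphM.
all: try by move=> /IHx <-; rewrite ?rmorphN ?rmorphXn.
all: by rewrite ?rmorphB ?rmorphD ?rmorphM ?rmorphN !rmorphXn ?rmorph1 ?rmorph_nat.
Qed.

Record generic_point (F : fieldType) (s qm qn : F) : Prop := GenericPoint {
  s_neq0 : s != 0;
  qm_neq0 : qm != 0;
  qn_neq0 : qn != 0;
  poly_neq0 : forall e, is_poly e -> reval 0 0 0 e != 0 :> rat -> reval s qm qn e != 0 }.

Lemma generic_point_K : generic_point s_ Qm Qn.
Proof.
split; try exact: var_neq0.
move=> e pe; apply: contra => /eqP evalK_e0.
have /eqP : tofrac (poly_of e) = 0 by rewrite rmorph_poly_of.
rewrite tofrac_eq0 => /eqP p0.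
have := rmorph_poly_of (meval (fun _ : 'I_3 => 0 : rat)) pe.
by rewrite /= !mevalXU p0 meval0 => <-.
Qed.

Lemma evalK_eq0 e :
  (forall (F : fieldType) (s qm qn : F), generic_point s qm qn -> reval s qm qn e = 0) ->
  evalK e = 0.
Proof. by apply; exact: generic_point_K. Qed.

(** * Finite matrices over A *)

Lemma evalK0 : evalK Zero = 0. Proof. by []. Qed.

Definition rmatrix := seq (seq rexpr).
Definition entry (L : rmatrix) i j := nth Zero (nth [::] L i) j.
Definition width (L : rmatrix) := foldr (fun r m => maxn (size r) m) 0%N L.
Definition ore_of (L : rmatrix) : ore := fun i j => evalK (entry L i j).

Lemma size_row_width L i : (size (nth [::] L i) <= width L)%N.
Proof.
elim: L i => [|r L IH] [|i] //=; first exact: leq_maxl.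
exact: leq_trans (IH i) (leq_maxr _ _).
Qed.

Lemma entry_out L i j : (size L <= i)%N || (width L <= j)%N -> entry L i j = Zero.
Proof.
rewrite /entry => /orP[i_out | j_out]; first by rewrite (nth_default [::] i_out) nth_nil.
by apply: nth_default; apply: leq_trans (size_row_width L i) j_out.
Qed.

Definition is_Zero e := if e is Zero then true else false.
Lemma is_ZeroP e : is_Zero e -> e = Zero. Proof. by case: e. Qed.
Definition radd x y := if is_Zero x then y else if is_Zero y then x else Add x y.
Definition rmul x y := if is_Zero x then Zero else if is_Zero y then Zero else Mul x y.
Definition ropp x := if is_Zero x then Zero else Opp x.

Lemma evalK_radd x y : evalK (radd x y) = evalK x + evalK y.
Proof.
rewrite /radd; case: ifP => [/is_ZeroP -> | _]; first by rewrite evalK0 add0r.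
by case: ifP => [/is_ZeroP -> | _]; first by rewrite evalK0 addr0.
Qed.
Lemma evalK_rmul x y : evalK (rmul x y) = evalK x * evalK y.
Proof.
rewrite /rmul; case: ifP => [/is_ZeroP -> | _]; first by rewrite evalK0 mul0r.
by case: ifP => [/is_ZeroP -> | _]; first by rewrite evalK0 mulr0.
Qed.
Lemma evalK_ropp x : evalK (ropp x) = - evalK x.
Proof. by rewrite /ropp; case: ifP => [/is_ZeroP -> | _]; first by rewrite evalK0 oppr0. Qed.

Definition rsum (l : seq rexpr) := foldr radd Zero l.
Lemma evalK_rsum (T : Type) (l : seq T) (f : T -> rexpr) :
  evalK (rsum (map f l)) = \sum_(x <- l) evalK (f x).
Proof. by elim: l => [|x l IH]; rewrite ?big_nil ?big_cons //= evalK_radd IH. Qed.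

Definition shift_mn i j e := iter i shift_m (iter j shift_n e).
Lemma evalK_shift_mn i j e : iter i sigm (iter j sign (evalK e)) = evalK (shift_mn i j e).
Proof.
rewrite /shift_mn; have -> : iter j sign (evalK e) = evalK (iter j shift_n e).
  by elim: j => [|j IH] //=; rewrite IH sign_evalK.
by elim: i => [|i IH] //=; rewrite IH sigm_evalK.
Qed.
Lemma shift_mn_Zero i j : shift_mn i j Zero = Zero.
Proof.
rewrite /shift_mn; have -> : iter j shift_n Zero = Zero by elim: j => //= j ->.
by elim: i => //= i ->.
Qed.

Definition mmul (L1 L2 : rmatrix) : rmatrix :=
  mkseq (fun a => mkseq (fun b =>
     rsum [seq rsum [seq rmul (entry L1 i j) (shift_mn i j (entry L2 (a - i) (b - j)))
                    | j <- iota 0 b.+1] | i <- iota 0 a.+1])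
    (width L1 + width L2).-1) (size L1 + size L2).-1.

Lemma entry_mkseq (g : nat -> nat -> rexpr) H W a b :
  entry (mkseq (fun a => mkseq (g a) W) H) a b =
  if (a < H)%N && (b < W)%N then g a b else Zero.
Proof.
rewrite /entry; case: (ltnP a H) => Ha /=.
  rewrite nth_mkseq //; case: (ltnP b W) => Hb; first by rewrite nth_mkseq.
  by rewrite nth_default ?size_mkseq.
by rewrite (nth_default [::]) ?size_mkseq ?nth_nil.
Qed.

Lemma sum_iota_ord (R : zmodType) n (F : nat -> R) : \sum_(x <- iota 0 n) F x = \sum_(i < n) F i.
Proof. by rewrite -(big_mkord xpredT) /index_iota subn0. Qed.

Lemma omul_ore_of_out L1 L2 a b :
  ~~ ((a < (size L1 + size L2).-1) && (b < (width L1 + width L2).-1))%N ->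
  omul (ore_of L1) (ore_of L2) a b = 0.
Proof.
move=> ab_out; apply: big1 => i _; apply: big1 => j _.
have [ij_out | ij_in] := boolP ((size L1 <= i) || (width L1 <= j))%N.
  by rewrite /ore_of entry_out // evalK0 mul0r.
rewrite /ore_of evalK_shift_mn (entry_out (L := L2)) ?shift_mn_Zero ?evalK0 ?mulr0 //.
have := ltn_ord i; have := ltn_ord j; have := size_row_width L2 (a - i).
move: ab_out ij_in; rewrite negb_and negb_or -!ltnNge => /orP[] ? /andP[? ?] ? ? ?.
- by apply/orP; left; lia.
- by apply/orP; right; lia.
Qed.

Lemma ore_of_mmul L1 L2 : ore_of (mmul L1 L2) = omul (ore_of L1) (ore_of L2).
Proof.
apply: functional_extensionality => a; apply: functional_extensionality => b.
rewrite {1}/ore_of /mmul entry_mkseq; case: ifP => [_ | /negbT ab_out].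
  rewrite evalK_rsum sum_iota_ord; apply: eq_bigr => i _.
  rewrite evalK_rsum sum_iota_ord; apply: eq_bigr => j _.
  by rewrite evalK_rmul evalK_shift_mn.
by rewrite omul_ore_of_out.
Qed.

Definition mzip (f : rexpr -> rexpr -> rexpr) (L1 L2 : rmatrix) : rmatrix :=
  mkseq (fun a => mkseq (fun b => f (entry L1 a b) (entry L2 a b))
     (maxn (width L1) (width L2))) (maxn (size L1) (size L2)).

Lemma entry_mzip f (op : K -> K -> K) L1 L2 :
  (forall x y, evalK (f x y) = op (evalK x) (evalK y)) -> op 0 0 = 0 ->
  forall a b, evalK (entry (mzip f L1 L2) a b) = op (evalK (entry L1 a b)) (evalK (entry L2 a b)).
Proof.
move=> fE op00 a b; rewrite entry_mkseq; case: ifP => [_ | /negbT]; first exact: fE.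
rewrite negb_and -!leqNgt !geq_max => /orP[/andP[a1 a2] | /andP[b1 b2]].
- by rewrite !entry_out ?a1 ?a2 ?evalK0.
- by rewrite !entry_out ?b1 ?b2 ?orbT ?evalK0.
Qed.

Definition madd := mzip radd.
Definition mopp L := mzip (fun x _ => ropp x) L [::].
Definition msub := mzip (fun x y => radd x (ropp y)).

Lemma ore_of_madd L1 L2 : ore_of (madd L1 L2) = oadd (ore_of L1) (ore_of L2).
Proof.
apply: functional_extensionality => a; apply: functional_extensionality => b.
by rewrite /oadd /ore_of (entry_mzip (op := +%R)) ?addr0 //; exact: evalK_radd.
Qed.

Lemma ore_of_mopp L : ore_of (mopp L) = oopp (ore_of L).
Proof.
apply: functional_extensionality => a; apply: functional_extensionality => b.
by rewrite /oopp /ore_of (entry_mzip (op := fun x _ => - x)) ?oppr0 // => x y; exact: evalK_ropp.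
Qed.

Fixpoint all_zero_row (r : seq rexpr) : Prop :=
  if r is d :: r' then (if is_Zero d then True else evalK d = 0) /\ all_zero_row r' else True.
Fixpoint all_zero (M : rmatrix) : Prop :=
  if M is r :: M' then all_zero_row r /\ all_zero M' else True.

Lemma all_zero_rowP r : all_zero_row r -> forall b, evalK (nth Zero r b) = 0.
Proof.
elim: r => [|d r IH] /=; first by move=> _ b; rewrite nth_nil.
case=> d0 r0 [|b] /=; last exact: IH.
by move: d0; case: ifP => [/is_ZeroP -> _ | _ ->].
Qed.

Lemma all_zeroP M : all_zero M -> forall a b, evalK (entry M a b) = 0.
Proof.
rewrite /entry; elim: M => [|r M IH] /=; first by move=> _ a b; rewrite !nth_nil.
by case=> r0 M0 [|a] b /=; [exact: all_zero_rowP | exact: IH].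
Qed.

Lemma ore_of_eq L1 L2 : all_zero (msub L1 L2) -> ore_of L1 = ore_of L2.
Proof.
move=> diff0; apply: functional_extensionality => a; apply: functional_extensionality => b.
have := all_zeroP diff0 a b; rewrite (entry_mzip (op := fun x y => x - y)) ?subrr //.
  by move/eqP; rewrite subr_eq0 => /eqP.
by move=> x y; rewrite evalK_radd evalK_ropp.
Qed.

Lemma ore_of_const e : ore_of [:: [:: e]] = oc (evalK e).
Proof.
apply: functional_extensionality => i; apply: functional_extensionality => j.
by rewrite /oc /ore_of /entry; case: i => [|i]; case: j => [|j] //=; rewrite ?nth_nil ?evalK0.
Qed.

Lemma ore_of_Em : ore_of [:: [:: Zero]; [:: One]] = oEm.
Proof.
apply: functional_extensionality => i; apply: functional_extensionality => j.
by rewrite /oEm /ore_of /entry; case: i => [|[|i]]; case: j => [|j] //=; rewrite ?nth_nil ?evalK0.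
Qed.

Lemma ore_of_En : ore_of [:: [:: Zero; One]] = oEn.
Proof.
apply: functional_extensionality => i; apply: functional_extensionality => j.
by rewrite /oEn /ore_of /entry; case: i => [|i]; case: j => [|[|j]] //=; rewrite ?nth_nil ?evalK0.
Qed.

Lemma fin_supp_ore_of L : fin_supp (ore_of L).
Proof.
exists (maxn (size L) (width L)) => i j /orP ij_big.
by rewrite /ore_of entry_out //; apply/orP; case: ij_big; [left | right]; lia.
Qed.

(** * Normal forms *)

Inductive oexpr :=
  | OConst of rexpr | OEm | OEn | OAdd of oexpr & oexpr | OOpp of oexpr | OMul of oexpr & oexpr
  | OMx of rmatrix.

Fixpoint oeval (x : oexpr) : ore :=
  match x with
  | OConst e => oc (evalK e) | OEm => oEm | OEn => oEn
  | OAdd x y => oadd (oeval x) (oeval y) | OOpp x => oopp (oeval x)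
  | OMul x y => omul (oeval x) (oeval y) | OMx L => ore_of L
  end.

Fixpoint onorm (x : oexpr) : rmatrix :=
  match x with
  | OConst e => [:: [:: e]] | OEm => [:: [:: Zero]; [:: One]] | OEn => [:: [:: Zero; One]]
  | OAdd x y => madd (onorm x) (onorm y) | OOpp x => mopp (onorm x)
  | OMul x y => mmul (onorm x) (onorm y) | OMx L => L
  end.

Lemma oeval_onorm x : oeval x = ore_of (onorm x).
Proof.
elim: x => [e|||x IHx y IHy|x IHx|x IHx y IHy|L] /=.
- by rewrite ore_of_const.
- by rewrite ore_of_Em.
- by rewrite ore_of_En.
- by rewrite IHx IHy ore_of_madd.
- by rewrite IHx ore_of_mopp.
- by rewrite IHx IHy ore_of_mmul.
- by [].
Qed.

(* Exchanging Q_m and Q_n (and E_m, E_n) maps each operator attached to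
   (E_m, Q_m) to its counterpart attached to (E_n, Q_n). *)
Fixpoint rswap (e : rexpr) : rexpr :=
  match e with
  | VarQm => VarQn | VarQn => VarQm
  | Add x y => Add (rswap x) (rswap y)
  | Opp x => Opp (rswap x)
  | Mul x y => Mul (rswap x) (rswap y)
  | Inv x => Inv (rswap x)
  | Pow x n => Pow (rswap x) n
  | Mon b c i j k => Mon b c i k j
  | Fac b a v => Fac b a (~~ v)
  | e => e
  end.

Definition mswap (L : rmatrix) : rmatrix :=
  mkseq (fun j => [seq rswap (nth Zero r j) | r <- L]) (width L).

Ltac reify_rexpr s qm qn t :=
  lazymatch t with
  | (?a + ?b)%R =>
      let ra := reify_rexpr s qm qn a in let rb := reify_rexpr s qm qn b in constr:(Add ra rb)
  | (- ?a)%R => let ra := reify_rexpr s qm qn a in constr:(Opp ra)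
  | (?a * ?b)%R =>
      let ra := reify_rexpr s qm qn a in let rb := reify_rexpr s qm qn b in constr:(Mul ra rb)
  | (?a ^-1)%R => let ra := reify_rexpr s qm qn a in constr:(Inv ra)
  | (?a ^+ ?n)%R => let ra := reify_rexpr s qm qn a in constr:(Pow ra n)
  | 0%R => constr:(Zero)
  | 1%R => constr:(One)
  | (?n%:R)%R => constr:(Nat n)
  | s => constr:(VarS)
  | qm => constr:(VarQm)
  | qn => constr:(VarQn)
  end.

Ltac reify_ore t :=
  lazymatch t with
  | oadd ?a ?b => let ra := reify_ore a in let rb := reify_ore b in constr:(OAdd ra rb)
  | oopp ?a => let ra := reify_ore a in constr:(OOpp ra)
  | omul ?a ?b => let ra := reify_ore a in let rb := reify_ore b in constr:(OMul ra rb)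
  | oc ?c => let e := reify_rexpr s_ Qm Qn c in constr:(OConst e)
  | oEm => constr:(OEm)
  | oEn => constr:(OEn)
  | ore_of ?L => constr:(OMx L)
  end.

Ltac neq0 H s qm qn :=
  lazymatch goal with
  | |- is_true (?x != 0) =>
     first [ exact: (s_neq0 H) | exact: (qm_neq0 H) | exact: (qn_neq0 H)
           | lazymatch x with
             | (?a * ?b)%R => apply: mulf_neq0; [neq0 H s qm qn | neq0 H s qm qn]
             | (?a ^+ ?n)%R => apply: expf_neq0; neq0 H s qm qn
             | _ => let e := reify_rexpr s qm qn x in
                    apply: (@poly_neq0 _ s qm qn H e); vm_compute; reflexivity
             end ]
  end.

Ltac field_generic :=
  match goal with H : generic_point ?s ?qm ?qn |- _ =>
    field; repeat match goal with |- is_true (_ && _) => apply/andP; split end;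
    neq0 H s qm qn
  end.

(* Reflect both sides into matrices, compute the difference of their normal
   forms and prove each remaining entry zero by [field] at a generic point. *)
Ltac ore_eq :=
  unfold Y, u1, u2, v1, v2, P0, P1, sEm, sEn, Phi; cbv beta zeta;
  match goal with |- ?l = ?r =>
    let x := reify_ore l in let y := reify_ore r in
    change (oeval x = oeval y); rewrite !oeval_onorm
  end;
  apply: ore_of_eq;
  match goal with |- all_zero ?M =>
    let M' := eval vm_compute in M in
    rewrite (_ : M = M'); last by vm_compute end;
  cbn [all_zero all_zero_row is_Zero];
  repeat match goal with |- _ /\ _ => split end;
  try exact I;
  apply: evalK_eq0 => F s qm qn H; cbn [reval]; field_generic.

Fixpoint efold (op : rexpr -> rexpr -> rexpr) (e0 : rexpr) (l : seq rexpr) : rexpr :=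
  match l with [::] => e0 | [:: x] => x | x :: l' => op x (efold op e0 l') end.

Definition ratf (num den : seq rexpr) : rexpr :=
  Mul (efold Add Zero num) (Inv (efold Mul One den)).

(* Normal forms computed externally; caching those of the intermediate
   operators keeps every [field] problem small. *)
Definition Ym_nf : rmatrix :=
  [:: [:: ratf [:: Mon false 1 4 4 0]
           [:: Fac true 1 false; Fac true 2 false; Fac true 3 false; Fac false 1 false;
               Fac false 2 false; Fac false 3 false]];
      [:: ratf [:: Mon true 1 3 2 0; Mon true 1 5 2 0; Mon true 1 9 6 0; Mon true 1 11 6 0]
           [:: Fac true 1 false; Fac true 3 false; Fac true 5 false; Fac false 1 false;
               Fac false 3 false; Fac false 5 false]];
      [:: ratf [:: Mon false 1 2 0 0; Mon false 1 8 4 0; Mon false 1 10 4 0; Mon false 1 12 4 0;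
               Mon true 1 16 8 0; Mon true 1 18 8 0; Mon true 1 20 8 0; Mon true 1 26 12 0]
           [:: Fac true 2 false; Fac true 3 false; Fac true 5 false; Fac true 6 false;
               Fac false 2 false; Fac false 3 false; Fac false 5 false; Fac false 6 false]];
      [:: ratf [:: Mon true 1 7 2 0; Mon true 1 9 2 0; Mon true 1 17 6 0; Mon true 1 19 6 0]
           [:: Fac true 3 false; Fac true 5 false; Fac true 7 false; Fac false 3 false;
               Fac false 5 false; Fac false 7 false]];
      [:: ratf [:: Mon false 1 16 4 0]
           [:: Fac true 5 false; Fac true 6 false; Fac true 7 false; Fac false 5 false;
               Fac false 6 false; Fac false 7 false]] ].

Definition PYm_nf : rmatrix :=
  [:: [:: ratf [:: Mon false 1 4 4 0; Mon true 1 10 6 0]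
           [:: Fac true 1 false; Fac true 3 false; Fac false 1 false; Fac false 2 false;
               Fac false 3 false; Fac false 4 false]];
      [:: ratf [:: Mon true 1 3 2 0; Mon true 1 5 2 0; Mon false 1 5 4 0; Mon false 1 7 4 0;
               Mon false 1 9 4 0; Mon true 1 9 6 0; Mon true 1 11 6 0; Mon true 1 13 6 0;
               Mon false 1 13 8 0; Mon false 1 15 8 0]
           [:: Fac true 1 false; Fac true 3 false; Fac false 1 false; Fac false 3 false;
               Fac false 4 false; Fac false 6 false]];
      [:: ratf [:: Mon false 1 2 0 0; Mon true 2 6 2 0; Mon true 1 8 2 0; Mon false 2 10 4 0;
               Mon false 3 12 4 0; Mon false 1 14 4 0; Mon true 1 14 6 0; Mon true 3 16 6 0;
               Mon true 2 18 6 0; Mon false 1 20 8 0; Mon false 2 22 8 0; Mon true 1 26 10 0]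
           [:: Fac true 3 false; Fac true 7 false; Fac false 2 false; Fac false 3 false;
               Fac false 6 false; Fac false 7 false]];
      [:: ratf [:: Mon false 1 3 0 0; Mon true 1 7 2 0; Mon true 2 9 2 0; Mon false 1 11 4 0;
               Mon false 3 13 4 0; Mon false 2 15 4 0; Mon true 2 17 6 0; Mon true 3 19 6 0;
               Mon true 1 21 6 0; Mon false 2 23 8 0; Mon false 1 25 8 0; Mon true 1 29 10 0]
           [:: Fac true 3 false; Fac true 7 false; Fac false 3 false; Fac false 4 false;
               Fac false 7 false; Fac false 8 false]];
      [:: ratf [:: Mon true 1 10 2 0; Mon true 1 12 2 0; Mon false 1 16 4 0; Mon false 1 18 4 0;
               Mon false 1 20 4 0; Mon true 1 22 6 0; Mon true 1 24 6 0; Mon true 1 26 6 0;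
               Mon false 1 30 8 0; Mon false 1 32 8 0]
           [:: Fac true 7 false; Fac true 9 false; Fac false 4 false; Fac false 6 false;
               Fac false 7 false; Fac false 9 false]];
      [:: ratf [:: Mon false 1 21 4 0; Mon true 1 25 6 0]
           [:: Fac true 7 false; Fac true 9 false; Fac false 6 false; Fac false 7 false;
               Fac false 8 false; Fac false 9 false]] ].

Definition P0m_nf : rmatrix :=
  [:: [:: ratf [:: Mon false 1 2 0 0]
           [:: Fac true 2 false; Fac true 3 false; Fac false 3 false]];
      [:: ratf [:: Mon true 1 0 0 2; Mon false 1 2 2 0; Mon false 1 2 2 4; Mon true 1 4 2 2;
               Mon true 1 4 4 2; Mon true 1 8 4 2; Mon true 1 12 6 0; Mon true 1 12 6 2;
               Mon true 1 12 6 4; Mon false 1 14 8 2]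
           [:: Mon false 1 1 2 2; Fac true 3 false; Fac true 5 false; Fac false 3 false;
               Fac false 5 false]];
      [:: ratf [:: Mon true 1 0 0 0; Mon true 1 0 0 4; Mon false 1 2 2 0; Mon false 1 2 2 2;
               Mon false 1 2 2 4; Mon false 1 4 2 2; Mon true 1 4 4 2; Mon false 1 6 2 0;
               Mon false 1 6 2 2; Mon false 1 6 2 4; Mon true 2 6 4 2; Mon true 1 8 4 0;
               Mon true 2 8 4 2; Mon true 1 8 4 4; Mon true 1 10 4 2; Mon false 1 12 8 2;
               Mon false 2 14 8 2; Mon false 1 16 8 0; Mon false 2 16 8 2; Mon false 1 16 8 4;
               Mon false 1 18 8 2; Mon true 1 18 10 0; Mon true 1 18 10 2; Mon true 1 18 10 4;
               Mon true 1 20 10 2; Mon true 1 22 10 0; Mon true 1 22 10 2; Mon true 1 22 10 4;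
               Mon false 1 24 12 0; Mon false 1 24 12 4]
           [:: Mon false 1 2 2 2; Fac true 2 false; Fac true 3 false; Fac true 5 false;
               Fac true 6 false; Fac false 3 false; Fac false 5 false]];
      [:: ratf [:: Mon true 1 0 0 2; Mon false 1 6 2 0; Mon false 1 6 2 2; Mon false 1 6 2 4;
               Mon false 1 6 4 2; Mon false 1 10 4 2; Mon true 1 12 6 0; Mon true 1 12 6 4;
               Mon false 1 14 6 2; Mon false 1 18 8 2]
           [:: Mon false 1 3 2 2; Fac true 3 false; Fac true 5 false; Fac false 3 false;
               Fac false 5 false]];
      [:: ratf [:: Mon true 1 10 2 0]
           [:: Fac true 5 false; Fac true 6 false; Fac false 5 false]] ].

Definition Am_nf : rmatrix :=
  [:: [:: ratf [:: Mon false 1 2 0 0; Mon true 1 8 2 0]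
           [:: Fac true 3 false; Fac false 3 false; Fac false 4 false]];
      [:: ratf [:: Mon true 1 0 0 2; Mon false 1 2 2 0; Mon false 1 2 2 2; Mon false 1 2 2 4;
               Mon true 1 4 4 0; Mon true 1 4 4 2; Mon true 1 4 4 4; Mon false 1 6 4 2;
               Mon false 1 6 6 2; Mon true 1 10 4 2; Mon true 1 14 6 0; Mon true 1 14 6 2;
               Mon true 1 14 6 4; Mon false 1 16 8 0; Mon false 2 16 8 2; Mon false 1 16 8 4;
               Mon true 1 18 10 2]
           [:: Mon false 1 1 2 2; Fac true 3 false; Fac false 3 false; Fac false 4 false;
               Fac false 6 false]];
      [:: ratf [:: Mon true 1 0 0 0; Mon true 1 0 0 2; Mon true 1 0 0 4; Mon false 1 2 2 0;
               Mon false 1 2 2 2; Mon false 1 2 2 4; Mon false 2 4 2 0; Mon false 2 4 2 2;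
               Mon false 2 4 2 4; Mon true 1 4 4 2; Mon true 1 6 4 0; Mon true 2 6 4 2;
               Mon true 1 6 4 4; Mon false 1 8 2 2; Mon true 2 8 4 0; Mon true 3 8 4 2;
               Mon true 2 8 4 4; Mon false 1 8 6 2; Mon true 1 10 4 0; Mon true 1 10 4 2;
               Mon true 1 10 4 4; Mon false 1 10 6 2; Mon true 1 12 4 2; Mon false 2 12 6 0;
               Mon false 3 12 6 2; Mon false 2 12 6 4; Mon false 1 14 4 0; Mon false 1 14 4 2;
               Mon false 1 14 4 4; Mon false 1 14 6 0; Mon false 1 14 6 4; Mon true 1 16 6 0;
               Mon true 1 16 6 2; Mon true 1 16 6 4; Mon true 1 16 8 0; Mon true 1 16 8 2;
               Mon true 1 16 8 4; Mon true 2 18 6 0; Mon true 2 18 6 2; Mon true 2 18 6 4;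
               Mon false 2 18 8 2; Mon false 1 20 8 0; Mon false 2 20 8 2; Mon false 1 20 8 4;
               Mon false 2 22 8 0; Mon false 3 22 8 2; Mon false 2 22 8 4; Mon true 1 22 10 2;
               Mon false 1 24 8 0; Mon false 1 24 8 2; Mon false 1 24 8 4; Mon true 1 24 10 2;
               Mon true 2 26 10 0; Mon true 3 26 10 2; Mon true 2 26 10 4; Mon true 1 28 10 0;
               Mon true 1 28 10 2; Mon true 1 28 10 4; Mon false 1 30 12 0; Mon false 1 30 12 2;
               Mon false 1 30 12 4]
           [:: Mon false 1 2 2 2; Fac true 3 false; Fac true 7 false; Fac false 3 false;
               Fac false 6 false; Fac false 7 false]];
      [:: ratf [:: Mon true 1 0 0 0; Mon true 1 0 0 2; Mon true 1 0 0 4; Mon false 1 2 2 2;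
               Mon false 1 4 2 2; Mon false 2 6 2 0; Mon false 3 6 2 2; Mon false 2 6 2 4;
               Mon false 1 6 4 0; Mon false 1 6 4 2; Mon false 1 6 4 4; Mon false 1 8 2 0;
               Mon false 1 8 2 2; Mon false 1 8 2 4; Mon true 2 8 4 2; Mon true 1 8 6 2;
               Mon true 1 10 4 0; Mon true 2 10 4 2; Mon true 1 10 4 4; Mon true 1 10 6 2;
               Mon true 2 12 4 0; Mon true 3 12 4 2; Mon true 2 12 4 4; Mon true 2 12 6 0;
               Mon true 3 12 6 2; Mon true 2 12 6 4; Mon true 1 14 4 0; Mon true 1 14 4 2;
               Mon true 1 14 4 4; Mon true 1 14 6 0; Mon true 1 14 6 4; Mon false 1 14 8 2;
               Mon false 1 16 6 0; Mon false 1 16 6 2; Mon false 1 16 6 4; Mon false 1 16 8 0;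
               Mon false 2 16 8 2; Mon false 1 16 8 4; Mon false 2 18 6 0; Mon false 2 18 6 2;
               Mon false 2 18 6 4; Mon false 2 18 8 0; Mon false 3 18 8 2; Mon false 2 18 8 4;
               Mon false 1 20 8 0; Mon false 1 20 8 2; Mon false 1 20 8 4; Mon false 1 22 8 2;
               Mon true 1 22 10 0; Mon true 1 22 10 2; Mon true 1 22 10 4; Mon true 1 24 8 0;
               Mon true 1 24 8 2; Mon true 1 24 8 4; Mon true 2 24 10 0; Mon true 2 24 10 2;
               Mon true 2 24 10 4; Mon true 1 28 10 2; Mon false 1 30 12 0; Mon false 1 30 12 2;
               Mon false 1 30 12 4]
           [:: Mon false 1 3 2 2; Fac true 3 false; Fac true 7 false; Fac false 3 false;
               Fac false 4 false; Fac false 7 false]];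
      [:: ratf [:: Mon true 1 0 0 2; Mon false 1 8 2 0; Mon false 2 8 2 2; Mon false 1 8 2 4;
               Mon false 1 8 4 2; Mon true 1 16 4 0; Mon true 1 16 4 2; Mon true 1 16 4 4;
               Mon true 1 16 6 0; Mon true 1 16 6 2; Mon true 1 16 6 4; Mon false 1 18 6 2;
               Mon true 1 22 6 2; Mon false 1 24 8 0; Mon false 1 24 8 2; Mon false 1 24 8 4;
               Mon true 1 32 10 2]
           [:: Mon false 1 4 2 2; Fac true 7 false; Fac false 4 false; Fac false 6 false;
               Fac false 7 false]];
      [:: ratf [:: Mon true 1 13 2 0; Mon false 1 17 4 0]
           [:: Fac true 7 false; Fac false 6 false; Fac false 7 false]] ].

Definition cofactor_nf : rmatrix :=
  [:: [:: ratf [:: Mon false 1 5 0 2; Mon false 1 5 2 0; Mon false 1 7 2 2; Mon false 1 9 4 4;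
               Mon true 1 11 0 4; Mon true 2 11 2 2; Mon true 1 11 4 0; Mon true 1 13 2 4;
               Mon true 1 13 4 2; Mon true 1 15 4 6; Mon true 1 15 6 4; Mon false 1 17 2 4;
               Mon false 1 17 4 2; Mon false 1 19 4 4; Mon false 1 21 6 6]
           [:: Fac true 1 false; Fac true 1 true; Fac true 3 false; Fac true 3 true;
               Fac false 1 false; Fac false 1 true; Fac false 2 false; Fac false 2 true;
               Fac false 3 false; Fac false 3 true; Fac false 4 false; Fac false 4 true];
          ratf [:: Mon true 1 2 2 0; Mon true 1 4 0 2; Mon false 1 4 4 2; Mon false 1 6 2 4;
               Mon false 1 8 0 4; Mon false 1 8 4 0; Mon true 1 8 4 4; Mon true 1 8 4 6;
               Mon false 1 10 2 2; Mon true 1 10 4 4; Mon true 1 10 6 2; Mon true 1 12 0 6;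
               Mon true 1 12 2 4; Mon true 1 12 4 4; Mon true 1 14 0 6; Mon true 1 14 2 4;
               Mon true 1 14 2 6; Mon false 1 14 4 6; Mon false 1 14 6 4; Mon false 1 14 6 6;
               Mon true 1 16 2 6; Mon true 1 16 4 6; Mon false 1 16 6 4; Mon false 1 18 2 6;
               Mon true 1 18 2 8; Mon false 1 18 4 4; Mon true 1 18 4 8; Mon false 1 20 2 6;
               Mon false 1 20 4 6; Mon false 1 20 4 10; Mon true 1 20 6 6; Mon false 1 22 4 6;
               Mon false 1 22 6 6; Mon false 1 24 4 8; Mon false 1 24 6 8; Mon true 1 26 6 10]
           [:: Mon false 1 0 0 2; Fac true 1 false; Fac true 3 false; Fac true 3 true;
               Fac false 1 false; Fac false 2 false; Fac false 2 true; Fac false 3 false;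
               Fac false 3 true; Fac false 4 false; Fac false 4 true; Fac false 6 true];
          ratf [:: Mon true 1 1 2 0; Mon true 1 1 4 0; Mon false 1 3 4 2; Mon true 1 5 0 2;
               Mon false 1 5 4 2; Mon false 1 7 2 4; Mon false 1 7 4 0; Mon false 1 7 4 2;
               Mon false 1 7 4 4; Mon false 1 7 6 0; Mon false 1 9 0 4; Mon false 1 9 2 2;
               Mon true 1 9 4 4; Mon true 1 9 4 6; Mon true 1 9 6 2; Mon false 1 11 0 4;
               Mon false 1 11 2 2; Mon true 1 11 2 4; Mon true 2 11 4 4; Mon true 1 11 4 6;
               Mon true 1 11 6 2; Mon false 1 13 0 4; Mon true 1 13 0 6; Mon true 1 13 2 6;
               Mon true 2 13 4 4; Mon true 1 13 6 2; Mon true 1 13 6 4; Mon true 2 15 0 6;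
               Mon true 1 15 2 6; Mon true 1 15 4 2; Mon false 1 15 4 4; Mon false 1 15 4 6;
               Mon false 1 15 6 4; Mon false 1 15 6 6; Mon true 1 17 0 6; Mon true 1 17 2 4;
               Mon true 1 17 2 6; Mon false 1 17 2 8; Mon false 1 17 4 4; Mon false 1 17 4 6;
               Mon false 1 17 4 8; Mon false 2 17 6 4; Mon false 1 17 6 6; Mon false 1 19 0 8;
               Mon true 1 19 2 4; Mon false 2 19 2 6; Mon false 1 19 4 6; Mon true 1 19 4 8;
               Mon false 1 19 6 4; Mon false 1 21 0 8; Mon false 2 21 2 6; Mon true 1 21 2 8;
               Mon true 1 21 4 4; Mon false 1 21 4 6; Mon true 2 21 4 8; Mon true 1 21 6 4;
               Mon true 1 21 6 6; Mon false 1 23 0 8; Mon false 1 23 2 6; Mon false 1 23 4 6;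
               Mon true 2 23 4 8; Mon false 1 23 4 10; Mon true 1 23 6 6; Mon true 1 23 6 8;
               Mon true 1 25 0 10; Mon true 1 25 4 6; Mon false 1 25 4 8; Mon false 1 25 4 10;
               Mon false 1 25 6 8; Mon true 1 27 2 8; Mon false 1 27 4 8; Mon false 1 27 4 10;
               Mon false 2 27 6 8; Mon true 1 29 2 8; Mon false 1 29 2 10; Mon false 1 29 6 8;
               Mon true 1 29 6 10; Mon false 1 31 2 10; Mon true 1 31 2 12; Mon true 1 31 4 8;
               Mon true 1 31 4 12; Mon true 1 31 6 8; Mon true 1 31 6 10; Mon true 1 33 6 10;
               Mon true 1 35 4 10; Mon false 1 37 4 12; Mon false 1 37 6 12]
           [:: Mon false 1 0 0 2; Fac true 1 false; Fac true 3 false; Fac true 3 true;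
               Fac true 7 true; Fac false 1 false; Fac false 2 false; Fac false 3 false;
               Fac false 3 true; Fac false 4 false; Fac false 4 true; Fac false 6 true;
               Fac false 7 true];
          ratf [:: Mon true 1 0 4 0; Mon false 1 6 6 0; Mon false 1 8 2 2; Mon false 1 8 4 2;
               Mon false 1 8 4 4; Mon false 1 12 0 4; Mon false 1 14 0 4; Mon false 1 14 2 4;
               Mon true 1 14 4 2; Mon true 1 14 4 4; Mon true 1 14 6 2; Mon true 1 14 6 4;
               Mon false 1 16 2 4; Mon true 1 16 2 6; Mon false 1 16 4 4; Mon true 1 18 0 6;
               Mon true 1 18 2 4; Mon false 1 18 4 6; Mon true 1 20 2 4; Mon true 1 20 4 4;
               Mon false 1 20 4 6; Mon false 1 20 6 4; Mon false 1 22 2 6; Mon true 1 22 4 4;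
               Mon false 1 22 4 6; Mon true 1 22 6 4; Mon false 1 24 0 8; Mon false 1 24 2 6;
               Mon true 1 24 4 8; Mon true 1 24 6 6; Mon true 1 26 6 6; Mon true 1 28 4 6;
               Mon true 1 30 2 8; Mon false 1 30 6 8; Mon false 1 32 2 10; Mon true 1 38 4 10]
           [:: Mon false 1 0 0 2; Fac true 1 false; Fac true 3 false; Fac true 7 true;
               Fac false 1 false; Fac false 2 false; Fac false 3 false; Fac false 4 false;
               Fac false 4 true; Fac false 6 true; Fac false 7 true; Fac false 8 true];
          ratf [:: Mon true 1 17 4 2; Mon false 1 21 4 4; Mon true 1 23 0 4; Mon false 1 23 6 2;
               Mon true 1 25 2 4; Mon false 1 27 0 6; Mon true 1 27 6 4; Mon false 1 29 2 4;
               Mon false 1 29 2 6; Mon false 1 31 4 4; Mon true 2 33 2 6; Mon true 1 35 4 6;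
               Mon false 1 37 2 8; Mon false 1 39 4 6; Mon true 1 43 4 8]
           [:: Fac true 1 false; Fac true 3 false; Fac true 7 true; Fac true 9 true;
               Fac false 1 false; Fac false 2 false; Fac false 3 false; Fac false 4 false;
               Fac false 6 true; Fac false 7 true; Fac false 8 true; Fac false 9 true]];
      [:: ratf [:: Mon true 1 2 0 2; Mon true 1 4 2 0; Mon false 1 4 2 4; Mon false 1 6 4 2;
               Mon false 1 8 0 4; Mon false 1 8 4 0; Mon true 1 8 4 4; Mon true 1 8 6 4;
               Mon false 1 10 2 2; Mon true 1 10 2 6; Mon true 1 10 4 4; Mon true 1 12 4 2;
               Mon true 1 12 4 4; Mon true 1 12 6 0; Mon true 1 14 4 2; Mon false 1 14 4 6;
               Mon true 1 14 6 0; Mon true 1 14 6 2; Mon false 1 14 6 4; Mon false 1 14 6 6;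
               Mon false 1 16 4 6; Mon true 1 16 6 2; Mon true 1 16 6 4; Mon false 1 18 4 4;
               Mon false 1 18 6 2; Mon true 1 18 8 2; Mon true 1 18 8 4; Mon false 1 20 6 2;
               Mon false 1 20 6 4; Mon true 1 20 6 6; Mon false 1 20 10 4; Mon false 1 22 6 4;
               Mon false 1 22 6 6; Mon false 1 24 8 4; Mon false 1 24 8 6; Mon true 1 26 10 6]
           [:: Mon false 1 0 2 0; Fac true 1 true; Fac true 3 false; Fac true 3 true;
               Fac false 1 true; Fac false 2 false; Fac false 2 true; Fac false 3 false;
               Fac false 3 true; Fac false 4 false; Fac false 4 true; Fac false 6 false];
          ratf [:: Mon false 1 1 0 2; Mon false 1 1 2 0; Mon true 1 3 2 4; Mon true 1 3 4 2;
               Mon true 1 5 0 4; Mon true 1 5 2 2; Mon true 2 5 2 4; Mon true 1 5 4 0;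
               Mon true 2 5 4 2; Mon false 1 7 4 4; Mon false 1 7 4 6; Mon false 1 7 6 4;
               Mon false 1 9 0 6; Mon false 1 9 2 4; Mon false 1 9 2 6; Mon false 1 9 4 2;
               Mon false 4 9 4 4; Mon false 1 9 4 6; Mon false 1 9 6 0; Mon false 1 9 6 2;
               Mon false 1 9 6 4; Mon false 1 11 0 6; Mon false 1 11 2 4; Mon false 1 11 4 2;
               Mon false 1 11 4 4; Mon false 1 11 6 0; Mon true 1 13 2 8; Mon true 1 13 4 4;
               Mon true 2 13 4 6; Mon true 2 13 6 4; Mon true 2 13 6 6; Mon true 1 13 8 2;
               Mon true 2 15 4 4; Mon true 1 15 4 6; Mon true 1 15 6 4; Mon false 1 17 2 8;
               Mon false 1 17 4 6; Mon false 1 17 4 8; Mon false 1 17 6 4; Mon false 1 17 6 8;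
               Mon false 1 17 8 2; Mon false 1 17 8 4; Mon false 1 17 8 6; Mon false 1 19 4 6;
               Mon false 1 19 4 8; Mon true 1 19 4 10; Mon false 1 19 6 4; Mon false 1 19 6 6;
               Mon false 1 19 8 4; Mon true 1 19 10 4; Mon false 1 21 4 6; Mon true 1 21 4 8;
               Mon true 1 21 4 10; Mon false 1 21 6 4; Mon true 1 21 6 6; Mon true 1 21 8 4;
               Mon true 1 21 10 4; Mon false 2 23 6 6; Mon true 1 23 6 8; Mon true 1 23 8 6;
               Mon false 1 25 6 6; Mon false 2 25 6 8; Mon false 1 25 6 10; Mon false 2 25 8 6;
               Mon false 1 25 10 6; Mon false 1 27 6 8; Mon false 1 27 8 6; Mon false 1 27 8 8;
               Mon true 1 29 8 10; Mon true 1 29 10 8]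
           [:: Mon false 1 0 2 2; Fac true 3 false; Fac true 3 true; Fac false 2 false;
               Fac false 2 true; Fac false 3 false; Fac false 3 true; Fac false 4 false;
               Fac false 4 true; Fac false 6 false; Fac false 6 true];
          ratf [:: Mon false 1 0 2 0; Mon false 1 0 4 0; Mon false 1 2 0 2; Mon false 1 2 2 2;
               Mon false 1 2 4 0; Mon true 1 2 4 2; Mon true 1 4 2 4; Mon true 1 4 4 0;
               Mon true 2 4 4 2; Mon true 1 6 0 4; Mon true 1 6 2 2; Mon true 2 6 2 4;
               Mon true 3 6 4 2; Mon true 1 6 4 4; Mon true 1 6 6 0; Mon true 1 6 6 2;
               Mon true 1 8 0 4; Mon true 1 8 2 2; Mon true 1 8 2 4; Mon true 1 8 4 2;
               Mon false 1 8 4 6; Mon false 1 8 6 0; Mon false 1 8 6 2; Mon false 1 8 6 4;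
               Mon true 1 10 0 4; Mon false 1 10 0 6; Mon false 2 10 2 4; Mon false 1 10 2 6;
               Mon false 1 10 4 2; Mon false 5 10 4 4; Mon false 2 10 4 6; Mon false 1 10 6 0;
               Mon false 1 10 6 2; Mon false 1 10 6 4; Mon false 1 10 8 0; Mon false 2 12 0 6;
               Mon false 1 12 2 4; Mon false 3 12 2 6; Mon false 2 12 4 2; Mon false 4 12 4 4;
               Mon false 1 12 4 6; Mon false 1 12 6 2; Mon false 2 12 6 4; Mon true 1 12 8 2;
               Mon false 1 14 0 6; Mon false 1 14 2 6; Mon true 1 14 2 8; Mon true 1 14 4 4;
               Mon true 2 14 4 6; Mon true 1 14 6 2; Mon true 2 14 6 4; Mon true 2 14 6 6;
               Mon true 1 14 8 2; Mon true 1 16 0 8; Mon true 1 16 2 6; Mon true 2 16 2 8;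
               Mon true 3 16 4 4; Mon true 5 16 4 6; Mon true 1 16 4 8; Mon true 1 16 6 2;
               Mon true 2 16 6 4; Mon true 3 16 6 6; Mon true 1 16 8 2; Mon true 1 16 8 4;
               Mon true 1 18 0 8; Mon true 2 18 2 6; Mon true 1 18 2 8; Mon true 1 18 4 4;
               Mon true 2 18 4 6; Mon true 1 18 6 2; Mon false 1 18 6 4; Mon true 1 18 6 6;
               Mon false 1 18 6 8; Mon false 1 18 8 2; Mon false 1 18 8 4; Mon false 1 18 8 6;
               Mon false 1 18 10 2; Mon true 1 20 0 8; Mon false 2 20 2 8; Mon true 1 20 4 4;
               Mon false 2 20 4 6; Mon false 5 20 4 8; Mon false 3 20 6 4; Mon false 2 20 6 6;
               Mon false 1 20 6 8; Mon false 2 20 8 4; Mon false 1 20 8 6; Mon true 1 20 10 4;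
               Mon false 1 22 0 10; Mon false 1 22 2 8; Mon false 1 22 2 10; Mon false 4 22 4 6;
               Mon false 4 22 4 8; Mon true 1 22 4 10; Mon true 1 22 6 4; Mon false 2 22 6 6;
               Mon false 2 22 6 8; Mon true 1 22 10 4; Mon false 1 24 4 6; Mon true 1 24 4 8;
               Mon true 2 24 4 10; Mon true 1 24 6 4; Mon true 2 24 6 8; Mon true 2 24 8 4;
               Mon true 1 24 8 6; Mon true 1 24 10 4; Mon true 1 26 2 10; Mon true 3 26 4 8;
               Mon true 3 26 4 10; Mon true 1 26 6 6; Mon true 2 26 6 8; Mon true 1 26 6 10;
               Mon true 1 26 8 4; Mon true 1 26 8 8; Mon false 1 26 10 6; Mon true 1 28 2 10;
               Mon true 1 28 4 8; Mon true 1 28 4 10; Mon true 1 28 6 6; Mon false 1 28 6 8;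
               Mon false 1 28 6 10; Mon false 2 28 8 6; Mon false 1 28 8 8; Mon false 2 28 10 6;
               Mon false 1 30 2 12; Mon true 1 30 4 8; Mon false 1 30 4 10; Mon false 1 30 4 12;
               Mon false 3 30 6 8; Mon false 1 30 6 10; Mon false 1 30 8 6; Mon false 2 30 8 8;
               Mon false 1 30 10 6; Mon true 1 30 10 8; Mon false 2 32 4 10; Mon false 1 32 4 12;
               Mon true 1 32 6 8; Mon false 1 32 6 10; Mon true 1 32 8 10; Mon true 1 32 10 8;
               Mon true 1 34 4 12; Mon true 1 34 6 8; Mon true 1 34 6 10; Mon true 2 34 8 8;
               Mon true 1 34 8 10; Mon true 1 34 10 8; Mon true 1 36 6 10; Mon true 1 36 6 12;
               Mon true 1 36 8 8; Mon true 1 36 8 10; Mon true 1 38 6 10; Mon false 1 38 6 12;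
               Mon false 1 38 8 10; Mon false 1 38 10 10; Mon false 1 40 6 12; Mon false 1 40 8 12]
           [:: Mon false 1 0 2 2; Fac true 3 false; Fac true 3 true; Fac true 7 true;
               Fac false 2 false; Fac false 3 false; Fac false 3 true; Fac false 4 false;
               Fac false 4 true; Fac false 6 false; Fac false 6 true; Fac false 7 true];
          ratf [:: Mon false 1 0 4 0; Mon false 1 2 4 0; Mon false 1 4 2 2; Mon true 1 6 6 0;
               Mon true 1 8 2 2; Mon true 1 8 4 2; Mon true 1 8 4 4; Mon true 1 8 6 2;
               Mon true 1 10 0 4; Mon true 1 10 2 4; Mon true 1 10 4 2; Mon true 1 10 4 4;
               Mon false 1 10 8 0; Mon true 1 12 0 4; Mon false 1 12 4 2; Mon false 1 14 2 6;
               Mon false 2 14 4 4; Mon false 1 14 6 2; Mon false 2 14 6 4; Mon false 1 16 0 6;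
               Mon false 2 16 2 6; Mon false 1 16 4 4; Mon true 2 16 6 2; Mon true 1 18 4 4;
               Mon true 1 18 4 6; Mon true 1 18 6 2; Mon true 1 18 6 6; Mon true 1 18 8 2;
               Mon true 1 18 8 4; Mon true 1 20 2 6; Mon true 1 20 4 4; Mon true 4 20 4 6;
               Mon true 1 20 6 4; Mon true 1 20 6 6; Mon false 1 20 10 2; Mon true 1 22 0 8;
               Mon true 1 22 2 6; Mon true 1 22 4 4; Mon true 1 22 4 6; Mon false 1 22 6 4;
               Mon false 1 24 4 6; Mon false 1 24 4 8; Mon true 2 24 6 4; Mon false 2 24 6 6;
               Mon false 1 24 8 4; Mon false 1 26 2 8; Mon false 2 26 4 6; Mon false 2 26 4 8;
               Mon true 1 26 6 4; Mon false 1 26 6 6; Mon true 2 26 8 4; Mon true 1 26 10 4;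
               Mon true 1 28 6 6; Mon true 1 28 8 4; Mon true 1 28 8 6; Mon true 1 30 4 8;
               Mon true 1 30 6 6; Mon true 1 30 6 8; Mon true 1 30 8 6; Mon false 1 30 10 6;
               Mon true 1 32 2 10; Mon true 1 32 4 8; Mon true 1 32 6 6; Mon false 1 32 8 6;
               Mon false 1 32 10 6; Mon false 1 34 8 8; Mon false 1 36 4 10; Mon true 1 38 8 8;
               Mon true 1 40 6 10; Mon true 1 42 6 10]
           [:: Mon false 1 1 2 2; Fac true 3 false; Fac true 7 true; Fac false 2 false;
               Fac false 3 false; Fac false 4 false; Fac false 4 true; Fac false 6 false;
               Fac false 6 true; Fac false 7 true; Fac false 8 true];
          ratf [:: Mon true 1 12 2 2; Mon false 1 16 2 4; Mon false 1 16 4 2; Mon false 1 16 6 2;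
               Mon false 1 18 4 2; Mon false 1 20 0 4; Mon true 1 20 4 4; Mon true 1 20 6 4;
               Mon true 1 22 4 4; Mon true 1 22 6 2; Mon true 1 24 0 6; Mon true 1 24 4 4;
               Mon false 1 24 6 2; Mon false 1 26 6 4; Mon false 1 26 8 2; Mon false 1 28 4 6;
               Mon true 1 28 6 4; Mon true 1 28 10 2; Mon false 1 30 4 4; Mon true 1 30 8 4;
               Mon false 1 32 2 6; Mon false 1 32 6 4; Mon false 1 32 10 4; Mon true 1 34 4 6;
               Mon false 1 34 6 4; Mon true 1 36 2 8; Mon true 1 36 4 6; Mon true 1 36 6 6;
               Mon false 1 36 8 4; Mon true 1 38 6 6; Mon false 1 40 4 8; Mon false 1 40 6 6;
               Mon true 1 40 8 6; Mon false 1 42 6 6; Mon true 1 44 6 8; Mon true 1 46 6 8]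
           [:: Mon false 1 0 2 0; Fac true 3 false; Fac true 7 true; Fac true 9 true;
               Fac false 2 false; Fac false 3 false; Fac false 4 false; Fac false 6 false;
               Fac false 6 true; Fac false 7 true; Fac false 8 true; Fac false 9 true]];
      [:: ratf [:: Mon true 1 1 0 2; Mon true 1 1 0 4; Mon false 1 3 2 4; Mon true 1 5 2 0;
               Mon false 1 5 2 4; Mon false 1 7 0 4; Mon false 1 7 0 6; Mon false 1 7 2 4;
               Mon false 1 7 4 2; Mon false 1 7 4 4; Mon false 1 9 2 2; Mon true 1 9 2 6;
               Mon false 1 9 4 0; Mon true 1 9 4 4; Mon true 1 9 6 4; Mon false 1 11 2 2;
               Mon true 1 11 2 6; Mon false 1 11 4 0; Mon true 1 11 4 2; Mon true 2 11 4 4;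
               Mon true 1 11 6 4; Mon true 1 13 2 6; Mon false 1 13 4 0; Mon true 2 13 4 4;
               Mon true 1 13 4 6; Mon true 1 13 6 0; Mon true 1 13 6 2; Mon true 1 15 2 4;
               Mon false 1 15 4 4; Mon false 1 15 4 6; Mon true 2 15 6 0; Mon true 1 15 6 2;
               Mon false 1 15 6 4; Mon false 1 15 6 6; Mon true 1 17 4 2; Mon false 1 17 4 4;
               Mon false 2 17 4 6; Mon true 1 17 6 0; Mon true 1 17 6 2; Mon false 1 17 6 4;
               Mon false 1 17 6 6; Mon false 1 17 8 2; Mon false 1 17 8 4; Mon true 1 19 4 2;
               Mon false 1 19 4 6; Mon false 2 19 6 2; Mon false 1 19 6 4; Mon false 1 19 8 0;
               Mon true 1 19 8 4; Mon true 1 21 4 4; Mon true 1 21 4 6; Mon false 2 21 6 2;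
               Mon false 1 21 6 4; Mon true 1 21 6 6; Mon false 1 21 8 0; Mon true 1 21 8 2;
               Mon true 2 21 8 4; Mon false 1 23 6 2; Mon false 1 23 6 4; Mon true 1 23 6 6;
               Mon false 1 23 8 0; Mon true 2 23 8 4; Mon true 1 23 8 6; Mon false 1 23 10 4;
               Mon true 1 25 6 4; Mon false 1 25 8 4; Mon false 1 25 8 6; Mon true 1 25 10 0;
               Mon false 1 25 10 4; Mon true 1 27 8 2; Mon false 1 27 8 4; Mon false 2 27 8 6;
               Mon false 1 27 10 4; Mon true 1 29 8 2; Mon false 1 29 8 6; Mon false 1 29 10 2;
               Mon true 1 29 10 6; Mon true 1 31 8 4; Mon true 1 31 8 6; Mon false 1 31 10 2;
               Mon true 1 31 10 6; Mon true 1 31 12 2; Mon true 1 31 12 4; Mon true 1 33 10 6;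
               Mon true 1 35 10 4; Mon false 1 37 12 4; Mon false 1 37 12 6]
           [:: Mon false 1 0 2 0; Fac true 1 true; Fac true 3 false; Fac true 3 true;
               Fac true 7 false; Fac false 1 true; Fac false 2 true; Fac false 3 false;
               Fac false 3 true; Fac false 4 false; Fac false 4 true; Fac false 6 false;
               Fac false 7 false];
          ratf [:: Mon false 1 0 0 2; Mon false 1 0 0 4; Mon false 1 2 0 4; Mon false 1 2 2 0;
               Mon false 1 2 2 2; Mon true 1 2 2 4; Mon true 1 4 0 4; Mon true 2 4 2 4;
               Mon true 1 4 4 2; Mon true 1 6 0 6; Mon true 1 6 2 2; Mon true 3 6 2 4;
               Mon true 1 6 2 6; Mon true 1 6 4 0; Mon true 2 6 4 2; Mon true 1 6 4 4;
               Mon false 1 8 0 6; Mon true 1 8 2 2; Mon true 1 8 2 4; Mon false 1 8 2 6;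
               Mon true 1 8 4 0; Mon true 1 8 4 2; Mon false 1 8 4 6; Mon false 1 8 6 4;
               Mon false 1 10 0 6; Mon false 1 10 0 8; Mon false 1 10 2 4; Mon false 1 10 2 6;
               Mon true 1 10 4 0; Mon false 2 10 4 2; Mon false 5 10 4 4; Mon false 1 10 4 6;
               Mon false 1 10 6 0; Mon false 1 10 6 2; Mon false 2 10 6 4; Mon false 2 12 2 4;
               Mon false 1 12 2 6; Mon true 1 12 2 8; Mon false 1 12 4 2; Mon false 4 12 4 4;
               Mon false 2 12 4 6; Mon false 2 12 6 0; Mon false 3 12 6 2; Mon false 1 12 6 4;
               Mon true 1 14 2 6; Mon true 1 14 2 8; Mon true 1 14 4 4; Mon true 2 14 4 6;
               Mon false 1 14 6 0; Mon false 1 14 6 2; Mon true 2 14 6 4; Mon true 2 14 6 6;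
               Mon true 1 14 8 2; Mon true 1 16 2 6; Mon true 1 16 2 8; Mon true 3 16 4 4;
               Mon true 2 16 4 6; Mon true 1 16 4 8; Mon true 1 16 6 2; Mon true 5 16 6 4;
               Mon true 3 16 6 6; Mon true 1 16 8 0; Mon true 2 16 8 2; Mon true 1 16 8 4;
               Mon true 1 18 2 6; Mon false 1 18 2 8; Mon false 1 18 2 10; Mon true 1 18 4 4;
               Mon false 1 18 4 6; Mon false 1 18 4 8; Mon true 2 18 6 2; Mon true 2 18 6 4;
               Mon true 1 18 6 6; Mon false 1 18 6 8; Mon true 1 18 8 0; Mon true 1 18 8 2;
               Mon false 1 18 8 6; Mon true 1 20 4 4; Mon false 3 20 4 6; Mon false 2 20 4 8;
               Mon true 1 20 4 10; Mon false 2 20 6 4; Mon false 2 20 6 6; Mon false 1 20 6 8;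
               Mon true 1 20 8 0; Mon false 2 20 8 2; Mon false 5 20 8 4; Mon false 1 20 8 6;
               Mon true 1 22 4 6; Mon true 1 22 4 10; Mon false 4 22 6 4; Mon false 2 22 6 6;
               Mon false 1 22 8 2; Mon false 4 22 8 4; Mon false 2 22 8 6; Mon false 1 22 10 0;
               Mon false 1 22 10 2; Mon true 1 22 10 4; Mon true 1 24 4 6; Mon true 2 24 4 8;
               Mon true 1 24 4 10; Mon false 1 24 6 4; Mon true 1 24 6 8; Mon true 1 24 8 4;
               Mon true 2 24 8 6; Mon true 2 24 10 4; Mon true 1 26 4 8; Mon true 1 26 6 6;
               Mon false 1 26 6 10; Mon true 3 26 8 4; Mon true 2 26 8 6; Mon true 1 26 8 8;
               Mon true 1 26 10 2; Mon true 3 26 10 4; Mon true 1 26 10 6; Mon true 1 28 6 6;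
               Mon false 2 28 6 8; Mon false 2 28 6 10; Mon true 1 28 8 4; Mon false 1 28 8 6;
               Mon false 1 28 8 8; Mon true 1 28 10 2; Mon true 1 28 10 4; Mon false 1 28 10 6;
               Mon false 1 30 6 8; Mon false 1 30 6 10; Mon true 1 30 8 4; Mon false 3 30 8 6;
               Mon false 2 30 8 8; Mon true 1 30 8 10; Mon false 1 30 10 4; Mon false 1 30 10 6;
               Mon false 1 30 12 2; Mon false 1 30 12 4; Mon true 1 32 8 6; Mon true 1 32 8 10;
               Mon false 2 32 10 4; Mon false 1 32 10 6; Mon true 1 32 10 8; Mon false 1 32 12 4;
               Mon true 1 34 8 6; Mon true 2 34 8 8; Mon true 1 34 8 10; Mon true 1 34 10 6;
               Mon true 1 34 10 8; Mon true 1 34 12 4; Mon true 1 36 8 8; Mon true 1 36 10 6;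
               Mon true 1 36 10 8; Mon true 1 36 12 6; Mon true 1 38 10 6; Mon false 1 38 10 8;
               Mon false 1 38 10 10; Mon false 1 38 12 6; Mon false 1 40 12 6; Mon false 1 40 12 8]
           [:: Mon false 1 0 2 2; Fac true 3 false; Fac true 3 true; Fac true 7 false;
               Fac false 2 true; Fac false 3 false; Fac false 3 true; Fac false 4 false;
               Fac false 4 true; Fac false 6 false; Fac false 6 true; Fac false 7 false];
          ratf [:: Mon true 1 0 0 2; Mon true 1 0 2 0; Mon false 1 2 0 2; Mon false 1 2 0 4;
               Mon false 1 2 2 0; Mon false 2 2 2 2; Mon false 1 2 4 0; Mon false 1 4 0 4;
               Mon false 2 4 2 2; Mon true 1 4 2 4; Mon false 1 4 4 0; Mon true 1 4 4 2;
               Mon false 1 6 2 2; Mon true 1 6 2 4; Mon true 1 6 4 2; Mon true 1 8 0 4;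
               Mon true 1 8 0 6; Mon true 1 8 2 2; Mon true 4 8 2 4; Mon true 1 8 2 6;
               Mon true 1 8 4 0; Mon true 4 8 4 2; Mon true 2 8 4 4; Mon true 1 8 6 0;
               Mon true 1 8 6 2; Mon true 1 10 0 4; Mon true 1 10 0 6; Mon true 2 10 2 2;
               Mon true 3 10 2 4; Mon true 1 10 4 0; Mon true 3 10 4 2; Mon true 1 10 4 4;
               Mon false 1 10 4 6; Mon true 1 10 6 0; Mon false 1 10 6 4; Mon false 1 12 0 6;
               Mon false 1 12 0 8; Mon false 1 12 2 4; Mon false 3 12 2 6; Mon false 1 12 4 2;
               Mon false 4 12 4 4; Mon false 2 12 4 6; Mon false 1 12 6 0; Mon false 3 12 6 2;
               Mon false 2 12 6 4; Mon false 1 12 8 0; Mon false 1 14 0 6; Mon false 1 14 0 8;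
               Mon false 3 14 2 4; Mon false 5 14 2 6; Mon true 1 14 2 8; Mon false 3 14 4 2;
               Mon false 7 14 4 4; Mon false 3 14 4 6; Mon false 1 14 6 0; Mon false 5 14 6 2;
               Mon false 3 14 6 4; Mon false 1 14 8 0; Mon true 1 14 8 2; Mon false 1 16 2 4;
               Mon false 2 16 2 6; Mon true 1 16 2 8; Mon false 1 16 4 2; Mon false 1 16 4 4;
               Mon false 1 16 4 6; Mon false 2 16 6 2; Mon false 1 16 6 4; Mon true 2 16 6 6;
               Mon true 1 16 8 2; Mon true 1 18 0 8; Mon false 1 18 2 4; Mon true 2 18 2 6;
               Mon true 4 18 2 8; Mon false 1 18 4 2; Mon true 5 18 4 4; Mon true 5 18 4 6;
               Mon true 2 18 4 8; Mon true 2 18 6 2; Mon true 5 18 6 4; Mon true 6 18 6 6;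
               Mon true 1 18 8 0; Mon true 4 18 8 2; Mon true 2 18 8 4; Mon true 1 20 0 8;
               Mon true 1 20 0 10; Mon true 4 20 2 6; Mon true 3 20 2 8; Mon true 5 20 4 4;
               Mon true 5 20 4 6; Mon true 1 20 4 8; Mon true 4 20 6 2; Mon true 5 20 6 4;
               Mon true 6 20 6 6; Mon false 1 20 6 8; Mon true 1 20 8 0; Mon true 3 20 8 2;
               Mon true 1 20 8 4; Mon false 1 20 8 6; Mon true 1 20 10 0; Mon false 1 22 0 10;
               Mon true 1 22 2 6; Mon false 1 22 2 8; Mon false 2 22 2 10; Mon false 1 22 4 6;
               Mon false 4 22 4 8; Mon true 1 22 6 2; Mon false 1 22 6 4; Mon false 1 22 6 6;
               Mon false 2 22 6 8; Mon false 1 22 8 2; Mon false 4 22 8 4; Mon false 2 22 8 6;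
               Mon false 1 22 10 0; Mon false 2 22 10 2; Mon false 3 24 2 8; Mon false 2 24 2 10;
               Mon false 1 24 4 4; Mon false 5 24 4 6; Mon false 7 24 4 8; Mon true 1 24 4 10;
               Mon false 5 24 6 4; Mon false 7 24 6 6; Mon false 3 24 6 8; Mon false 3 24 8 2;
               Mon false 7 24 8 4; Mon false 3 24 8 6; Mon false 2 24 10 2; Mon true 1 24 10 4;
               Mon false 1 26 2 8; Mon false 1 26 2 10; Mon false 2 26 4 6; Mon false 1 26 4 8;
               Mon true 1 26 4 10; Mon false 2 26 6 4; Mon false 4 26 6 6; Mon false 1 26 6 8;
               Mon false 1 26 8 2; Mon false 1 26 8 4; Mon false 1 26 8 6; Mon false 1 26 10 2;
               Mon true 1 26 10 4; Mon false 1 28 2 8; Mon true 1 28 2 10; Mon false 1 28 4 6;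
               Mon true 5 28 4 8; Mon true 4 28 4 10; Mon false 1 28 6 4; Mon true 4 28 6 6;
               Mon true 5 28 6 8; Mon true 1 28 6 10; Mon false 1 28 8 2; Mon true 5 28 8 4;
               Mon true 5 28 8 6; Mon true 2 28 8 8; Mon true 1 28 10 2; Mon true 4 28 10 4;
               Mon true 1 28 10 6; Mon true 2 30 2 10; Mon true 1 30 2 12; Mon true 5 30 4 8;
               Mon true 3 30 4 10; Mon true 7 30 6 6; Mon true 5 30 6 8; Mon true 5 30 8 4;
               Mon true 5 30 8 6; Mon true 1 30 8 8; Mon true 2 30 10 2; Mon true 3 30 10 4;
               Mon true 1 30 12 2; Mon false 1 32 2 12; Mon false 1 32 4 10; Mon false 1 32 4 12;
               Mon true 3 32 6 6; Mon false 1 32 6 8; Mon false 3 32 6 10; Mon false 1 32 8 6;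
               Mon false 4 32 8 8; Mon false 1 32 10 4; Mon false 3 32 10 6; Mon false 1 32 12 2;
               Mon false 1 32 12 4; Mon false 1 34 4 8; Mon false 3 34 4 10; Mon false 1 34 4 12;
               Mon false 5 34 6 8; Mon false 5 34 6 10; Mon false 1 34 8 4; Mon false 5 34 8 6;
               Mon false 7 34 8 8; Mon true 1 34 8 10; Mon false 3 34 10 4; Mon false 5 34 10 6;
               Mon true 1 34 10 8; Mon false 1 34 12 4; Mon false 1 36 4 10; Mon false 2 36 6 8;
               Mon false 2 36 6 10; Mon false 2 36 8 6; Mon false 1 36 8 8; Mon true 1 36 8 10;
               Mon false 1 36 10 4; Mon false 2 36 10 6; Mon true 1 36 10 8; Mon false 1 38 4 10;
               Mon true 1 38 4 12; Mon false 1 38 6 8; Mon true 2 38 6 10; Mon true 1 38 6 12;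
               Mon false 1 38 8 6; Mon true 5 38 8 8; Mon true 4 38 8 10; Mon false 1 38 10 4;
               Mon true 2 38 10 6; Mon true 4 38 10 8; Mon true 1 38 12 4; Mon true 1 38 12 6;
               Mon true 1 40 4 12; Mon true 4 40 6 10; Mon true 1 40 6 12; Mon true 5 40 8 8;
               Mon true 3 40 8 10; Mon true 4 40 10 6; Mon true 3 40 10 8; Mon true 1 40 12 4;
               Mon true 1 40 12 6; Mon true 1 42 6 10; Mon false 1 42 6 12; Mon false 1 42 8 10;
               Mon false 1 42 8 12; Mon true 1 42 10 6; Mon false 1 42 10 8; Mon false 2 42 10 10;
               Mon false 1 42 12 6; Mon false 1 42 12 8; Mon false 1 44 6 12; Mon false 1 44 8 8;
               Mon false 3 44 8 10; Mon false 1 44 8 12; Mon false 3 44 10 8; Mon false 2 44 10 10;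
               Mon false 1 44 12 6; Mon false 1 44 12 8; Mon false 1 46 8 10; Mon false 1 46 10 8;
               Mon false 1 46 10 10; Mon false 1 48 8 10; Mon true 1 48 8 12; Mon false 1 48 10 8;
               Mon true 1 48 10 10; Mon true 1 48 12 8; Mon true 1 50 8 12; Mon true 2 50 10 10;
               Mon true 1 50 10 12; Mon true 1 50 12 8; Mon true 1 50 12 10; Mon false 1 52 10 12;
               Mon false 1 52 12 10]
           [:: Mon false 1 1 2 2; Fac true 3 false; Fac true 3 true; Fac true 7 false;
               Fac true 7 true; Fac false 3 false; Fac false 3 true; Fac false 4 false;
               Fac false 4 true; Fac false 6 false; Fac false 6 true; Fac false 7 false;
               Fac false 7 true];
          ratf [:: Mon true 1 0 2 0; Mon true 1 2 0 2; Mon false 1 2 4 0; Mon false 1 4 2 2;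
               Mon false 1 4 4 0; Mon false 1 6 2 2; Mon false 1 6 4 0; Mon false 1 8 0 4;
               Mon false 1 8 2 2; Mon false 1 8 2 4; Mon false 1 8 4 2; Mon true 1 8 6 0;
               Mon true 1 10 0 4; Mon true 1 10 2 2; Mon true 1 10 2 4; Mon true 1 10 4 2;
               Mon true 1 10 4 4; Mon true 2 10 6 0; Mon true 1 10 6 2; Mon true 1 12 0 4;
               Mon true 1 12 0 6; Mon true 1 12 2 4; Mon true 2 12 4 2; Mon true 1 12 4 4;
               Mon true 1 12 6 0; Mon true 1 12 6 2; Mon false 1 12 8 0; Mon true 1 14 0 6;
               Mon true 1 14 2 4; Mon false 1 14 2 6; Mon true 2 14 4 4; Mon false 1 14 8 0;
               Mon false 1 16 0 6; Mon false 1 16 2 4; Mon false 2 16 2 6; Mon false 2 16 4 2;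
               Mon false 2 16 4 4; Mon false 1 16 6 2; Mon false 2 16 6 4; Mon false 1 16 8 0;
               Mon false 1 18 2 4; Mon false 3 18 2 6; Mon false 1 18 4 2; Mon false 2 18 4 4;
               Mon false 1 18 4 6; Mon false 3 18 6 4; Mon false 1 18 8 2; Mon false 1 20 2 4;
               Mon false 1 20 2 6; Mon true 1 20 4 4; Mon true 2 20 6 2; Mon false 1 20 6 4;
               Mon true 1 20 6 6; Mon true 1 20 8 2; Mon true 1 20 8 4; Mon true 1 20 10 0;
               Mon true 1 22 0 8; Mon true 1 22 2 6; Mon true 3 22 4 4; Mon true 5 22 4 6;
               Mon true 1 22 6 2; Mon true 2 22 6 4; Mon true 2 22 6 6; Mon true 2 22 8 2;
               Mon true 1 22 8 4; Mon true 2 24 2 6; Mon true 1 24 2 8; Mon false 1 24 4 4;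
               Mon true 4 24 4 6; Mon true 2 24 6 4; Mon true 1 24 6 6; Mon true 2 24 8 4;
               Mon false 1 24 10 2; Mon false 1 26 4 4; Mon false 1 26 4 6; Mon false 1 26 4 8;
               Mon false 2 26 6 6; Mon false 2 26 8 2; Mon false 2 26 8 4; Mon false 1 26 10 2;
               Mon false 1 28 2 8; Mon false 3 28 4 6; Mon false 2 28 4 8; Mon false 1 28 6 4;
               Mon false 5 28 6 6; Mon false 1 28 8 2; Mon false 2 28 8 4; Mon false 1 28 8 6;
               Mon false 1 28 10 2; Mon false 1 28 10 4; Mon false 1 30 2 8; Mon false 1 30 4 6;
               Mon false 1 30 4 8; Mon false 1 30 6 4; Mon false 2 30 6 6; Mon true 1 30 8 4;
               Mon true 1 30 10 2; Mon true 1 30 10 4; Mon false 1 32 4 6; Mon true 2 32 4 8;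
               Mon true 2 32 6 6; Mon true 1 32 6 8; Mon true 3 32 8 4; Mon true 5 32 8 6;
               Mon true 1 32 10 4; Mon true 1 32 12 2; Mon true 1 34 2 10; Mon true 1 34 4 8;
               Mon true 4 34 6 6; Mon true 3 34 6 8; Mon false 1 34 8 4; Mon true 4 34 8 6;
               Mon true 1 34 10 4; Mon false 1 34 10 6; Mon true 1 36 6 6; Mon true 1 36 6 8;
               Mon false 1 36 8 4; Mon false 1 36 8 6; Mon false 1 36 8 8; Mon false 1 36 10 4;
               Mon false 2 36 10 6; Mon false 1 38 4 10; Mon false 1 38 6 8; Mon false 3 38 8 6;
               Mon false 2 38 8 8; Mon false 1 38 10 4; Mon false 3 38 10 6; Mon false 1 38 12 4;
               Mon false 1 40 4 10; Mon false 2 40 6 8; Mon false 1 40 8 6; Mon false 1 40 8 8;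
               Mon false 1 40 10 4; Mon false 1 40 10 6; Mon true 1 40 12 4; Mon false 1 42 4 10;
               Mon true 1 42 6 10; Mon false 1 42 8 6; Mon true 2 42 8 8; Mon true 1 42 10 6;
               Mon true 1 42 12 4; Mon true 1 42 12 6; Mon true 2 44 6 10; Mon true 1 44 8 8;
               Mon true 2 44 10 6; Mon true 1 44 10 8; Mon true 1 44 12 6; Mon true 1 46 6 10;
               Mon false 1 46 12 6; Mon false 1 48 8 10; Mon false 1 48 10 8; Mon false 1 50 8 10;
               Mon false 1 50 10 8; Mon false 1 52 8 10; Mon true 1 52 12 8; Mon true 1 54 10 10]
           [:: Mon false 1 2 2 2; Fac true 3 false; Fac true 7 false; Fac true 7 true;
               Fac false 3 false; Fac false 4 false; Fac false 4 true; Fac false 6 false;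
               Fac false 6 true; Fac false 7 false; Fac false 7 true; Fac false 8 true];
          ratf [:: Mon false 1 9 0 2; Mon true 1 11 2 2; Mon true 1 13 0 4; Mon true 1 13 2 2;
               Mon true 1 15 2 2; Mon false 1 15 2 4; Mon true 1 15 4 2; Mon false 1 17 2 4;
               Mon false 1 17 4 2; Mon false 1 17 6 2; Mon false 1 19 0 4; Mon false 1 19 2 4;
               Mon false 2 19 4 2; Mon false 1 19 4 4; Mon false 1 19 6 2; Mon false 1 21 4 2;
               Mon true 1 21 4 4; Mon true 1 21 6 4; Mon true 1 23 0 6; Mon true 1 23 4 2;
               Mon true 2 23 4 4; Mon true 1 23 6 2; Mon true 1 23 6 4; Mon true 2 25 4 4;
               Mon true 1 25 6 2; Mon true 1 25 8 2; Mon true 1 27 2 4; Mon false 1 27 4 4;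
               Mon false 1 27 6 4; Mon false 1 27 8 2; Mon false 1 29 4 4; Mon false 1 29 4 6;
               Mon false 1 29 6 4; Mon false 2 29 8 2; Mon false 1 29 8 4; Mon false 1 31 2 6;
               Mon false 1 31 6 4; Mon false 1 31 8 2; Mon true 1 31 8 4; Mon true 1 31 10 2;
               Mon false 1 33 2 6; Mon true 1 33 4 4; Mon true 1 33 4 6; Mon false 1 33 6 4;
               Mon true 1 33 8 2; Mon true 2 33 8 4; Mon true 1 33 10 2; Mon false 1 35 6 4;
               Mon true 1 35 6 6; Mon true 2 35 8 4; Mon true 1 35 10 2; Mon false 1 35 10 4;
               Mon true 1 37 2 8; Mon true 1 37 6 4; Mon true 1 37 6 6; Mon false 1 37 8 4;
               Mon false 1 37 10 4; Mon true 1 39 4 6; Mon true 1 39 6 6; Mon false 1 39 8 4;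
               Mon false 1 39 8 6; Mon false 1 39 10 4; Mon false 1 39 12 2; Mon true 1 41 4 6;
               Mon false 1 41 4 8; Mon false 2 41 6 6; Mon false 1 43 4 8; Mon false 2 43 6 6;
               Mon true 1 43 8 4; Mon true 1 43 8 6; Mon true 1 43 12 4; Mon false 1 45 4 8;
               Mon false 1 45 6 6; Mon true 1 45 6 8; Mon true 2 47 6 8; Mon true 1 47 10 4;
               Mon true 1 49 6 8; Mon true 1 49 8 6; Mon false 1 49 12 4; Mon true 1 51 8 6;
               Mon false 1 51 8 8; Mon false 1 51 10 6; Mon false 1 53 8 8; Mon false 1 53 10 6;
               Mon true 1 53 12 6; Mon false 1 55 8 8; Mon true 1 57 10 8]
           [:: Mon false 1 0 2 0; Fac true 3 false; Fac true 7 false; Fac true 7 true;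
               Fac true 9 true; Fac false 3 false; Fac false 4 false; Fac false 6 false;
               Fac false 6 true; Fac false 7 false; Fac false 7 true; Fac false 8 true;
               Fac false 9 true]];
      [:: ratf [:: Mon true 1 0 0 4; Mon false 1 6 0 6; Mon false 1 8 2 2; Mon false 1 8 2 4;
               Mon false 1 8 4 4; Mon false 1 12 4 0; Mon true 1 14 2 4; Mon true 1 14 2 6;
               Mon false 1 14 4 0; Mon false 1 14 4 2; Mon true 1 14 4 4; Mon true 1 14 4 6;
               Mon false 1 16 4 2; Mon false 1 16 4 4; Mon true 1 16 6 2; Mon true 1 18 4 2;
               Mon true 1 18 6 0; Mon false 1 18 6 4; Mon true 1 20 4 2; Mon true 1 20 4 4;
               Mon false 1 20 4 6; Mon false 1 20 6 4; Mon true 1 22 4 4; Mon true 1 22 4 6;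
               Mon false 1 22 6 2; Mon false 1 22 6 4; Mon false 1 24 6 2; Mon true 1 24 6 6;
               Mon false 1 24 8 0; Mon true 1 24 8 4; Mon true 1 26 6 6; Mon true 1 28 6 4;
               Mon true 1 30 8 2; Mon false 1 30 8 6; Mon false 1 32 10 2; Mon true 1 38 10 4]
           [:: Mon false 1 0 2 0; Fac true 1 true; Fac true 3 true; Fac true 7 false;
               Fac false 1 true; Fac false 2 true; Fac false 3 true; Fac false 4 false;
               Fac false 4 true; Fac false 6 false; Fac false 7 false; Fac false 8 false];
          ratf [:: Mon false 1 0 0 4; Mon false 1 2 0 4; Mon false 1 4 2 2; Mon true 1 6 0 6;
               Mon true 1 8 2 2; Mon true 1 8 2 4; Mon true 1 8 2 6; Mon true 1 8 4 4;
               Mon false 1 10 0 8; Mon true 1 10 2 4; Mon true 1 10 4 0; Mon true 1 10 4 2;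
               Mon true 1 10 4 4; Mon false 1 12 2 4; Mon true 1 12 4 0; Mon false 1 14 2 6;
               Mon false 2 14 4 4; Mon false 2 14 4 6; Mon false 1 14 6 2; Mon true 2 16 2 6;
               Mon false 1 16 4 4; Mon false 1 16 6 0; Mon false 2 16 6 2; Mon true 1 18 2 6;
               Mon true 1 18 2 8; Mon true 1 18 4 4; Mon true 1 18 4 8; Mon true 1 18 6 4;
               Mon true 1 18 6 6; Mon false 1 20 2 10; Mon true 1 20 4 4; Mon true 1 20 4 6;
               Mon true 1 20 6 2; Mon true 4 20 6 4; Mon true 1 20 6 6; Mon true 1 22 4 4;
               Mon false 1 22 4 6; Mon true 1 22 6 2; Mon true 1 22 6 4; Mon true 1 22 8 0;
               Mon true 2 24 4 6; Mon false 1 24 4 8; Mon false 1 24 6 4; Mon false 2 24 6 6;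
               Mon false 1 24 8 4; Mon true 1 26 4 6; Mon true 2 26 4 8; Mon true 1 26 4 10;
               Mon false 2 26 6 4; Mon false 1 26 6 6; Mon false 1 26 8 2; Mon false 2 26 8 4;
               Mon true 1 28 4 8; Mon true 1 28 6 6; Mon true 1 28 6 8; Mon true 1 30 6 6;
               Mon true 1 30 6 8; Mon false 1 30 6 10; Mon true 1 30 8 4; Mon true 1 30 8 6;
               Mon true 1 32 6 6; Mon false 1 32 6 8; Mon false 1 32 6 10; Mon true 1 32 8 4;
               Mon true 1 32 10 2; Mon false 1 34 8 8; Mon false 1 36 10 4; Mon true 1 38 8 8;
               Mon true 1 40 10 6; Mon true 1 42 10 6]
           [:: Mon false 1 1 2 2; Fac true 3 true; Fac true 7 false; Fac false 2 true;
               Fac false 3 true; Fac false 4 false; Fac false 4 true; Fac false 6 false;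
               Fac false 6 true; Fac false 7 false; Fac false 8 false];
          ratf [:: Mon true 1 0 0 2; Mon false 1 2 0 4; Mon true 1 2 2 0; Mon false 1 4 0 4;
               Mon false 1 4 2 2; Mon false 1 6 0 4; Mon false 1 6 2 2; Mon true 1 8 0 6;
               Mon false 1 8 2 2; Mon false 1 8 2 4; Mon false 1 8 4 0; Mon false 1 8 4 2;
               Mon true 2 10 0 6; Mon true 1 10 2 2; Mon true 1 10 2 4; Mon true 1 10 2 6;
               Mon true 1 10 4 0; Mon true 1 10 4 2; Mon true 1 10 4 4; Mon true 1 12 0 6;
               Mon false 1 12 0 8; Mon true 2 12 2 4; Mon true 1 12 2 6; Mon true 1 12 4 0;
               Mon true 1 12 4 2; Mon true 1 12 4 4; Mon true 1 12 6 0; Mon false 1 14 0 8;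
               Mon true 1 14 4 2; Mon true 2 14 4 4; Mon true 1 14 6 0; Mon false 1 14 6 2;
               Mon false 1 16 0 8; Mon false 2 16 2 4; Mon false 1 16 2 6; Mon false 1 16 4 2;
               Mon false 2 16 4 4; Mon false 2 16 4 6; Mon false 1 16 6 0; Mon false 2 16 6 2;
               Mon false 1 18 2 4; Mon false 1 18 2 8; Mon false 1 18 4 2; Mon false 2 18 4 4;
               Mon false 3 18 4 6; Mon false 3 18 6 2; Mon false 1 18 6 4; Mon true 1 20 0 10;
               Mon true 2 20 2 6; Mon true 1 20 2 8; Mon false 1 20 4 2; Mon true 1 20 4 4;
               Mon false 1 20 4 6; Mon true 1 20 4 8; Mon false 1 20 6 2; Mon true 1 20 6 6;
               Mon true 1 22 2 6; Mon true 2 22 2 8; Mon true 3 22 4 4; Mon true 2 22 4 6;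
               Mon true 1 22 4 8; Mon true 1 22 6 2; Mon true 5 22 6 4; Mon true 2 22 6 6;
               Mon true 1 22 8 0; Mon false 1 24 2 10; Mon false 1 24 4 4; Mon true 2 24 4 6;
               Mon true 2 24 4 8; Mon true 2 24 6 2; Mon true 4 24 6 4; Mon true 1 24 6 6;
               Mon true 1 24 8 2; Mon false 2 26 2 8; Mon false 1 26 2 10; Mon false 1 26 4 4;
               Mon false 2 26 4 8; Mon false 1 26 6 4; Mon false 2 26 6 6; Mon false 1 26 8 4;
               Mon false 1 28 2 8; Mon false 1 28 2 10; Mon false 1 28 4 6; Mon false 2 28 4 8;
               Mon false 1 28 4 10; Mon false 3 28 6 4; Mon false 5 28 6 6; Mon false 1 28 6 8;
               Mon false 1 28 8 2; Mon false 2 28 8 4; Mon true 1 30 2 10; Mon false 1 30 4 6;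
               Mon true 1 30 4 8; Mon true 1 30 4 10; Mon false 1 30 6 4; Mon false 2 30 6 6;
               Mon false 1 30 8 2; Mon false 1 30 8 4; Mon true 1 32 2 12; Mon true 3 32 4 8;
               Mon true 1 32 4 10; Mon false 1 32 6 4; Mon true 2 32 6 6; Mon true 5 32 6 8;
               Mon true 2 32 8 4; Mon true 1 32 8 6; Mon false 1 34 4 8; Mon true 1 34 4 10;
               Mon true 4 34 6 6; Mon true 4 34 6 8; Mon false 1 34 6 10; Mon true 1 34 8 4;
               Mon true 3 34 8 6; Mon true 1 34 10 2; Mon false 1 36 4 8; Mon false 1 36 4 10;
               Mon true 1 36 6 6; Mon false 1 36 6 8; Mon false 2 36 6 10; Mon true 1 36 8 6;
               Mon false 1 36 8 8; Mon false 1 38 4 10; Mon false 1 38 4 12; Mon false 3 38 6 8;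
               Mon false 3 38 6 10; Mon false 1 38 8 6; Mon false 2 38 8 8; Mon false 1 38 10 4;
               Mon false 1 40 4 10; Mon true 1 40 4 12; Mon false 1 40 6 8; Mon false 1 40 6 10;
               Mon false 2 40 8 6; Mon false 1 40 8 8; Mon false 1 40 10 4; Mon true 1 42 4 12;
               Mon false 1 42 6 8; Mon true 1 42 6 10; Mon true 1 42 6 12; Mon true 2 42 8 8;
               Mon false 1 42 10 4; Mon true 1 42 10 6; Mon true 2 44 6 10; Mon true 1 44 6 12;
               Mon true 1 44 8 8; Mon true 1 44 8 10; Mon true 2 44 10 6; Mon false 1 46 6 12;
               Mon true 1 46 10 6; Mon false 1 48 8 10; Mon false 1 48 10 8; Mon false 1 50 8 10;
               Mon false 1 50 10 8; Mon true 1 52 8 12; Mon false 1 52 10 8; Mon true 1 54 10 10]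
           [:: Mon false 1 2 2 2; Fac true 3 true; Fac true 7 false; Fac true 7 true;
               Fac false 3 true; Fac false 4 false; Fac false 4 true; Fac false 6 false;
               Fac false 6 true; Fac false 7 false; Fac false 7 true; Fac false 8 false];
          ratf [:: Mon true 1 0 0 2; Mon true 1 0 2 0; Mon false 1 6 0 4; Mon false 1 6 4 0;
               Mon false 1 8 2 2; Mon false 1 8 2 4; Mon false 1 8 4 2; Mon true 1 10 0 6;
               Mon true 1 10 6 0; Mon true 1 12 0 6; Mon true 1 12 6 0; Mon true 1 14 2 4;
               Mon true 1 14 4 2; Mon true 2 14 4 4; Mon false 2 16 2 4; Mon false 2 16 4 2;
               Mon false 1 18 2 4; Mon false 1 18 2 6; Mon false 1 18 4 2; Mon false 1 18 4 6;
               Mon false 1 18 6 2; Mon false 1 18 6 4; Mon false 1 20 2 6; Mon false 1 20 4 4;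
               Mon false 1 20 4 6; Mon false 1 20 6 2; Mon false 1 20 6 4; Mon true 1 22 2 6;
               Mon true 1 22 4 4; Mon true 1 22 6 2; Mon true 1 24 2 8; Mon false 2 24 4 4;
               Mon true 2 24 4 6; Mon true 2 24 6 4; Mon true 1 24 8 2; Mon false 1 26 4 4;
               Mon true 1 26 4 6; Mon true 1 26 6 4; Mon false 1 28 2 8; Mon false 1 28 4 6;
               Mon false 1 28 6 4; Mon false 1 28 6 6; Mon false 1 28 8 2; Mon false 1 30 4 6;
               Mon false 1 30 4 8; Mon false 1 30 6 4; Mon false 4 30 6 6; Mon false 1 30 8 4;
               Mon false 1 32 4 6; Mon false 1 32 6 4; Mon false 1 32 6 6; Mon true 1 34 6 6;
               Mon true 1 34 6 8; Mon true 1 34 8 6; Mon true 2 36 6 6; Mon true 2 36 6 8;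
               Mon true 2 36 8 6; Mon false 1 40 4 10; Mon false 1 40 6 8; Mon false 1 40 8 6;
               Mon false 1 40 10 4; Mon false 1 42 4 10; Mon false 1 42 6 8; Mon false 1 42 8 6;
               Mon false 1 42 10 4; Mon true 1 46 6 10; Mon true 1 46 8 8; Mon true 1 46 10 6;
               Mon false 1 52 8 10; Mon false 1 52 10 8]
           [:: Mon false 1 1 2 2; Fac true 7 false; Fac true 7 true; Fac false 4 false;
               Fac false 4 true; Fac false 6 false; Fac false 6 true; Fac false 7 false;
               Fac false 7 true; Fac false 8 false; Fac false 8 true];
          ratf [:: Mon false 1 8 0 2; Mon true 1 12 0 4; Mon true 1 16 2 2; Mon true 1 16 4 2;
               Mon false 1 20 2 4; Mon false 1 20 4 4; Mon false 1 22 4 2; Mon true 1 24 4 2;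
               Mon true 1 26 2 4; Mon true 1 26 4 4; Mon true 1 26 6 2; Mon false 1 28 4 4;
               Mon true 1 28 6 2; Mon false 1 30 2 6; Mon false 1 30 6 4; Mon true 1 32 4 4;
               Mon false 1 32 6 4; Mon false 1 32 8 2; Mon true 1 34 4 4; Mon false 1 34 6 4;
               Mon false 1 36 4 6; Mon true 1 36 8 4; Mon false 1 38 4 6; Mon true 1 38 6 6;
               Mon true 1 40 4 6; Mon true 1 40 6 4; Mon true 1 42 4 6; Mon false 1 44 4 8;
               Mon false 1 44 6 6; Mon false 1 46 4 8; Mon false 1 46 6 6; Mon true 1 50 6 8;
               Mon true 1 50 10 4; Mon true 1 52 8 6; Mon false 1 54 10 6; Mon false 1 56 8 8]
           [:: Mon false 1 0 2 0; Fac true 7 false; Fac true 7 true; Fac true 9 true;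
               Fac false 4 false; Fac false 6 false; Fac false 6 true; Fac false 7 false;
               Fac false 7 true; Fac false 8 false; Fac false 8 true; Fac false 9 true]];
      [:: ratf [:: Mon true 1 17 2 4; Mon false 1 21 4 4; Mon false 1 23 2 6; Mon true 1 23 4 0;
               Mon true 1 25 4 2; Mon true 1 27 4 6; Mon false 1 27 6 0; Mon false 1 29 4 2;
               Mon false 1 29 6 2; Mon false 1 31 4 4; Mon true 2 33 6 2; Mon true 1 35 6 4;
               Mon false 1 37 8 2; Mon false 1 39 6 4; Mon true 1 43 8 4]
           [:: Fac true 1 true; Fac true 3 true; Fac true 7 false; Fac true 9 false;
               Fac false 1 true; Fac false 2 true; Fac false 3 true; Fac false 4 true;
               Fac false 6 false; Fac false 7 false; Fac false 8 false; Fac false 9 false];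
          ratf [:: Mon true 1 12 2 2; Mon false 1 16 2 4; Mon false 1 16 2 6; Mon false 1 16 4 2;
               Mon false 1 18 2 4; Mon false 1 20 4 0; Mon true 1 20 4 4; Mon true 1 20 4 6;
               Mon true 1 22 2 6; Mon true 1 22 4 4; Mon false 1 24 2 6; Mon true 1 24 4 4;
               Mon true 1 24 6 0; Mon false 1 26 2 8; Mon false 1 26 4 6; Mon true 1 28 2 10;
               Mon true 1 28 4 6; Mon false 1 28 6 4; Mon false 1 30 4 4; Mon true 1 30 4 8;
               Mon false 1 32 4 6; Mon false 1 32 4 10; Mon false 1 32 6 2; Mon false 1 34 4 6;
               Mon true 1 34 6 4; Mon false 1 36 4 8; Mon true 1 36 6 4; Mon true 1 36 6 6;
               Mon true 1 36 8 2; Mon true 1 38 6 6; Mon false 1 40 6 6; Mon true 1 40 6 8;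
               Mon false 1 40 8 4; Mon false 1 42 6 6; Mon true 1 44 8 6; Mon true 1 46 8 6]
           [:: Mon false 1 0 0 2; Fac true 3 true; Fac true 7 false; Fac true 9 false;
               Fac false 2 true; Fac false 3 true; Fac false 4 true; Fac false 6 false;
               Fac false 6 true; Fac false 7 false; Fac false 8 false; Fac false 9 false];
          ratf [:: Mon false 1 9 2 0; Mon true 1 11 2 2; Mon true 1 13 2 2; Mon true 1 13 4 0;
               Mon true 1 15 2 2; Mon true 1 15 2 4; Mon false 1 15 4 2; Mon false 1 17 2 4;
               Mon false 1 17 2 6; Mon false 1 17 4 2; Mon false 2 19 2 4; Mon false 1 19 2 6;
               Mon false 1 19 4 0; Mon false 1 19 4 2; Mon false 1 19 4 4; Mon false 1 21 2 4;
               Mon true 1 21 4 4; Mon true 1 21 4 6; Mon true 1 23 2 4; Mon true 1 23 2 6;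
               Mon true 2 23 4 4; Mon true 1 23 4 6; Mon true 1 23 6 0; Mon true 1 25 2 6;
               Mon true 1 25 2 8; Mon true 2 25 4 4; Mon false 1 27 2 8; Mon true 1 27 4 2;
               Mon false 1 27 4 4; Mon false 1 27 4 6; Mon false 2 29 2 8; Mon false 1 29 4 4;
               Mon false 1 29 4 6; Mon false 1 29 4 8; Mon false 1 29 6 4; Mon false 1 31 2 8;
               Mon true 1 31 2 10; Mon false 1 31 4 6; Mon true 1 31 4 8; Mon false 1 31 6 2;
               Mon true 1 33 2 8; Mon true 1 33 2 10; Mon true 1 33 4 4; Mon false 1 33 4 6;
               Mon true 2 33 4 8; Mon false 1 33 6 2; Mon true 1 33 6 4; Mon true 1 35 2 10;
               Mon false 1 35 4 6; Mon true 2 35 4 8; Mon false 1 35 4 10; Mon true 1 35 6 6;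
               Mon true 1 37 4 6; Mon false 1 37 4 8; Mon false 1 37 4 10; Mon true 1 37 6 6;
               Mon true 1 37 8 2; Mon false 1 39 2 12; Mon false 1 39 4 8; Mon false 1 39 4 10;
               Mon true 1 39 6 4; Mon true 1 39 6 6; Mon false 1 39 6 8; Mon true 1 41 6 4;
               Mon false 2 41 6 6; Mon false 1 41 8 4; Mon true 1 43 4 8; Mon true 1 43 4 12;
               Mon false 2 43 6 6; Mon true 1 43 6 8; Mon false 1 43 8 4; Mon false 1 45 6 6;
               Mon false 1 45 8 4; Mon true 1 45 8 6; Mon true 1 47 4 10; Mon true 2 47 8 6;
               Mon false 1 49 4 12; Mon true 1 49 6 8; Mon true 1 49 8 6; Mon true 1 51 6 8;
               Mon false 1 51 6 10; Mon false 1 51 8 8; Mon false 1 53 6 10; Mon true 1 53 6 12;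
               Mon false 1 53 8 8; Mon false 1 55 8 8; Mon true 1 57 8 10]
           [:: Mon false 1 0 0 2; Fac true 3 true; Fac true 7 false; Fac true 7 true;
               Fac true 9 false; Fac false 3 true; Fac false 4 true; Fac false 6 false;
               Fac false 6 true; Fac false 7 false; Fac false 7 true; Fac false 8 false;
               Fac false 9 false];
          ratf [:: Mon false 1 8 2 0; Mon true 1 12 4 0; Mon true 1 16 2 2; Mon true 1 16 2 4;
               Mon false 1 20 4 2; Mon false 1 20 4 4; Mon false 1 22 2 4; Mon true 1 24 2 4;
               Mon true 1 26 2 6; Mon true 1 26 4 2; Mon true 1 26 4 4; Mon true 1 28 2 6;
               Mon false 1 28 4 4; Mon false 1 30 4 6; Mon false 1 30 6 2; Mon false 1 32 2 8;
               Mon true 1 32 4 4; Mon false 1 32 4 6; Mon true 1 34 4 4; Mon false 1 34 4 6;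
               Mon true 1 36 4 8; Mon false 1 36 6 4; Mon false 1 38 6 4; Mon true 1 38 6 6;
               Mon true 1 40 4 6; Mon true 1 40 6 4; Mon true 1 42 6 4; Mon false 1 44 6 6;
               Mon false 1 44 8 4; Mon false 1 46 6 6; Mon false 1 46 8 4; Mon true 1 50 4 10;
               Mon true 1 50 8 6; Mon true 1 52 6 8; Mon false 1 54 6 10; Mon false 1 56 8 8]
           [:: Mon false 1 0 0 2; Fac true 7 false; Fac true 7 true; Fac true 9 false;
               Fac false 4 true; Fac false 6 false; Fac false 6 true; Fac false 7 false;
               Fac false 7 true; Fac false 8 false; Fac false 8 true; Fac false 9 false];
          ratf [:: Mon false 1 25 2 2; Mon true 1 29 2 4; Mon true 1 29 4 2; Mon false 1 33 4 4;
               Mon false 1 43 4 4; Mon true 1 47 4 6; Mon true 1 47 6 4; Mon false 1 51 4 6;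
               Mon false 1 51 6 4; Mon false 1 51 6 6; Mon true 1 55 4 8; Mon true 2 55 6 6;
               Mon true 1 55 8 4; Mon false 1 59 6 8; Mon false 1 59 8 6]
           [:: Fac true 7 false; Fac true 7 true; Fac true 9 false; Fac true 9 true;
               Fac false 6 false; Fac false 6 true; Fac false 7 false; Fac false 7 true;
               Fac false 8 false; Fac false 8 true; Fac false 9 false; Fac false 9 true]] ].

Lemma Ym_eq : Y sEm Qm = ore_of Ym_nf.
Proof. ore_eq. Qed.

Lemma Yn_eq : Y sEn Qn = ore_of (mswap Ym_nf).
Proof. ore_eq. Qed.

Lemma PYm_eq : omul (P1 sEm Qm) (Y sEm Qm) = ore_of PYm_nf.
Proof. rewrite Ym_eq; ore_eq. Qed.

Lemma PYn_eq : omul (P1 sEn Qn) (Y sEn Qn) = ore_of (mswap PYm_nf).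
Proof. rewrite Yn_eq; ore_eq. Qed.

Lemma P0m_eq : P0 sEm Qm Qn = ore_of P0m_nf.
Proof. rewrite /P0; cbv beta zeta; rewrite Ym_eq; ore_eq. Qed.

Lemma P0n_eq : P0 sEn Qn Qm = ore_of (mswap P0m_nf).
Proof. rewrite /P0; cbv beta zeta; rewrite Yn_eq; ore_eq. Qed.

Lemma frakAm_eq : frakAm = ore_of Am_nf.
Proof. rewrite /frakAm P0m_eq; ore_eq. Qed.

Lemma frakAn_eq : frakAn = ore_of (mswap Am_nf).
Proof. rewrite /frakAn P0n_eq; ore_eq. Qed.

Theorem proposition4p5 :
  exists C : ore, fin_supp C /\ bigop_elt = omul C Abi.
Proof.
exists (ore_of cofactor_nf); split; first exact: fin_supp_ore_of.
rewrite /bigop_elt PYm_eq PYn_eq frakAm_eq frakAn_eq /Abi.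
ore_eq.
Qed.
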